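(* Let $\zeta_c\in\mathcal C$ be a simple critical point, with representative critical point $x_{*,c}$ and branch value $\lambda_c$. Then there exist a neighborhood $\mathcal O$ of $\zeta_c$ and unique $C^1$ maps $\zeta\mapsto x_*(\zeta)$, $\zeta\mapsto\lambda(\zeta)$ on $\mathcal O$ with $(x_*(\zeta_c),\lambda(\zeta_c))=(x_{*,c},\lambda_c)$ and $F(\lambda(\zeta),x_*(\zeta);\zeta)=\partial_yF(\lambda(\zeta),x_*(\zeta);\zeta)=0$. If in addition $x_*(\zeta)$ remains a representative of the unique dominant orbit for $\zeta\in\mathcal O$, then $\rho_*(\zeta)=|x_*(\zeta)|$ on $\mathcal O$, and $\rho_*$ is $C^1$ on $\mathcal O$.
   Context: Fix integers $N\ge1$ and $2\le s_1<\dots<s_N$; put $s=\gcd(s_1,\dots,s_N)$. For $\zeta\in\mathbb C^N$ set $F(y,x;\zeta)=y-1-\sum_{n=1}^N\zeta_n x^{s_n}y^{s_n}$. The Taylor branch $U(x;\zeta)$ is the unique germ analytic at $x=0$ with $U(0;\zeta)=1$ and $F(U(x;\zeta),x;\zeta)=0$; its analytic continuation along paths is called the chosen Taylor sheet. $\rho_*(\zeta)$ is the supremum of $\rho>0$ such that $U(\cdot;\zeta)$ extends analytically to $|x|<\rho$. Dominant regime: $\rho_*(\zeta)<\infty$ and the chosen Taylor sheet has exactly $s$ singular points on $|x|=\rho_*(\zeta)$, forming one orbit $\{e^{2\pi ij/s}x_*(\zeta)\}_{j=0}^{s-1}$. The branch value at a singular point $x_*$ is $\lambda=\lim_{x\to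 x_*}U(x;\zeta)$ along the sheet (finite). $\mathcal C$ is the set of $\zeta$ in the dominant regime with $\rho_*(\zeta)=1$. $\zeta_c\in\mathcal C$ is a simple critical point if for a representative $x_{*,c}$ with branch value $\lambda_c$: $F=\partial_yF=0$ and $\partial_y^2F\ne0$ at $(\lambda_c,x_{*,c};\zeta_c)$. *)

From mathcomp Require Import ssreflect ssrfun ssrbool eqtype ssrnat div fintype bigop.
From Stdlib Require Import Reals.
From Coquelicot Require Import Coquelicot.

Set Implicit Arguments.
Unset Strict Implicit.

Local Open Scope R_scope.

Definition CN (N : nat) := 'I_N -> C.

Definition sgcd (N : nat) (s : 'I_N -> nat) : nat := \big[gcdn/O]_(i < N) s i.

Definition F (N : nat) (s : 'I_N -> nat) (z : CN N) (y x : C) : C :=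
  Cminus (Cminus y (RtoC 1))
         (\big[Cplus/RtoC 0]_(i < N) Cmult (z i) (Cmult (Cpow x (s i)) (Cpow y (s i)))).

Definition holo_at (f : C -> C) (z : C) : Prop :=
  @ex_derive C_AbsRing C_NormedModule f z.

Definition dyF N (s : 'I_N -> nat) (z : CN N) (y x : C) : C :=
  C_derive (fun w => F s z w x) y.
Definition dyyF N (s : 'I_N -> nat) (z : CN N) (y x : C) : C :=
  C_derive (fun w => dyF s z w x) y.

(* A representative of the Taylor germ: analytic near 0, U(0)=1, F(U(x),x)=0. *)
Definition taylor_germ N (s : 'I_N -> nat) (z : CN N) (U : C -> C) : Prop :=
  U (RtoC 0) = RtoC 1 /\
  exists r, 0 < r /\ forall x, Cmod x < r -> holo_at U x /\ F s z (U x) x = RtoC 0.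

Definition continues_germ N (s : 'I_N -> nat) (z : CN N) (D : C -> Prop) (h : C -> C) : Prop :=
  exists U, taylor_germ s z U /\
   (forall x, D x -> holo_at h x) /\
   exists r, 0 < r /\ forall x, Cmod x < r -> h x = U x.

Definition extends_to N (s : 'I_N -> nat) (z : CN N) (rho : R) : Prop :=
  exists h, continues_germ s z (fun x => Cmod x < rho) h.

Definition rho_star N (s : 'I_N -> nat) (z : CN N) : Rbar :=
  Lub_Rbar (fun rho => 0 < rho /\ extends_to s z rho).

Definition regular_pt N (s : 'I_N -> nat) (z : CN N) (x0 : C) : Prop :=
  exists eps, 0 < eps /\ exists h,
    continues_germ s z
      (fun x => Cmod x < real (rho_star s z) \/ Cmod (Cminus x x0) < eps) h.

Definition singular_pt N (s : 'I_N -> nat) (z : CN N) (x0 : C) : Prop :=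
  is_finite (rho_star s z) /\ Cmod x0 = real (rho_star s z) /\ ~ regular_pt s z x0.

Definition root_unity (m j : nat) : C :=
  (cos (2 * PI * INR j / INR m), sin (2 * PI * INR j / INR m)).

Definition dominant N (s : 'I_N -> nat) (z : CN N) : Prop :=
  is_finite (rho_star s z) /\
  exists x0, forall x, singular_pt s z x <->
    exists j, (j < sgcd s)%coq_nat /\ x = Cmult (root_unity (sgcd s) j) x0.

Definition branch_value N (s : 'I_N -> nat) (z : CN N) (x0 lam : C) : Prop :=
  exists h, continues_germ s z (fun x => Cmod x < real (rho_star s z)) h /\
    filterlim h (within (fun x => Cmod x < real (rho_star s z)) (@locally C_UniformSpace x0))
                (@locally C_UniformSpace lam).

Definition crit_set N (s : 'I_N -> nat) (z : CN N) : Prop :=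
  dominant s z /\ rho_star s z = Finite 1.

Definition CN_ball N (z : CN N) (r : R) (w : CN N) : Prop :=
  forall i, Cmod (Cminus (w i) (z i)) < r.

Definition CN_open N (O : CN N -> Prop) : Prop :=
  forall z, O z -> exists r, 0 < r /\ forall w, CN_ball z r w -> O w.

(* z + t * u * e_i  (t real, u in {1, i}) : the real coordinate directions of C^N *)
Definition shift N (z : CN N) (i : 'I_N) (b : bool) (t : R) : CN N :=
  fun j => if j == i then Cplus (z j) (Cmult (RtoC t) (if b then Ci else RtoC 1)) else z j.

(* Real C^1 on an open set O of C^N ~ R^{2N}: all 2N real partial derivatives
   exist on O and are continuous on O. *)
Definition C1_on N {V : NormedModule R_AbsRing} (f : CN N -> V) (O : CN N -> Prop) : Prop :=
  exists D : 'I_N -> bool -> CN N -> V,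
    (forall z i b, O z -> @is_derive R_AbsRing V (fun t => f (shift z i b t)) 0 (D i b z)) /\
    (forall i b z, O z -> forall eps, 0 < eps ->
       exists del, 0 < del /\ forall w, O w -> CN_ball z del w ->
         norm (minus (D i b w) (D i b z)) < eps).

(* Writing g(t) = sum_n zeta_n t^(s_n), we have F(y, x) = y - 1 - g(xy), so F = F_y = 0
   holds iff t = xy is a root of H(t) = t g'(t) - g(t) - 1 and x = 1/g'(t), y = 1 + g(t).
   Since y^2 F_yy = -t H'(t) at such a point, F_yy <> 0 means that t_c is a simple root
   of H.  Newton's map with frozen slope H'(t_c) is a contraction near t_c, uniformly for
   zeta near zeta_c, which produces a root t(zeta) depending Lipschitz-continuously on
   zeta; implicit differentiation along the 2N real coordinate directions shows that
   t(zeta), x_*(zeta) and lambda(zeta) are C^1.  For uniqueness, the product x' lambda'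
   of any other C^1 solution is again a root of H_zeta; the roots of H_zeta near t_c lie
   either within eta/4 of t_c or farther than eta, so by the intermediate value theorem
   x' lambda' cannot leave the small disc along a path of coordinate segments from zeta_c,
   and hence equals t(zeta).  Finally, when x_*(zeta) is a dominant singularity,
   rho_*(zeta) = |x_*(zeta)| by definition, and |x_*| is C^1 since x_* is C^1 and nonzero. *)

From HB Require Import structures.
From mathcomp Require Import ssreflect ssrfun ssrbool eqtype ssrnat seq fintype bigop.
From Stdlib Require Import Reals Lra Lia FunctionalExtensionality ClassicalEpsilon.
From Coquelicot Require Import Coquelicot.
Set Implicit Arguments.
Unset Strict Implicit.
Local Open Scope R_scope.

HB.instance Definition _ :=
  Monoid.isComLaw.Build C (RtoC 0) Cplus Cplus_assoc Cplus_comm Cplus_0_l.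
HB.instance Definition _ :=
  Monoid.isComLaw.Build R 0 Rplus (fun a b c => esym (Rplus_assoc a b c)) Rplus_comm Rplus_0_l.

Lemma Cmod_sub_diag (a : C) : Cmod (a - a) = 0.
Proof. by rewrite (_ : (a - a)%C = 0) ?Cmod_0 //; ring. Qed.

Lemma Cmod_sub_sym (a b : C) : Cmod (a - b) = Cmod (b - a).
Proof. by rewrite -Cmod_opp; congr Cmod; ring. Qed.

Lemma Cmod_sub_triangle (a b c : C) : Cmod (a - c) <= Cmod (a - b) + Cmod (b - c).
Proof. by rewrite (_ : (a - c = (a - b) + (b - c))%C); [apply: Cmod_triangle | ring]. Qed.

Lemma Cmod_sub_rev (a b : C) : Cmod a - Cmod b <= Cmod (a - b).
Proof. by have := Cmod_triangle (a - b) b; rewrite (_ : (a - b + b = a)%C); [lra | ring]. Qed.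

Lemma Rabs_Cmod_sub (a b : C) : Rabs (Cmod a - Cmod b) <= Cmod (a - b).
Proof.
apply: Rabs_le; split; last exact: Cmod_sub_rev.
by have := Cmod_sub_rev b a; rewrite Cmod_sub_sym; lra.
Qed.

Lemma Cmod_le_Rabs_sum (z : C) : Cmod z <= Rabs (fst z) + Rabs (snd z).
Proof.
have h1 := Rabs_pos (fst z); have h2 := Rabs_pos (snd z).
rewrite /Cmod -(sqrt_pow2 (Rabs (fst z) + Rabs (snd z))); last lra.
apply: sqrt_le_1_alt; rewrite -(pow2_abs (fst z)) -(pow2_abs (snd z)); nra.
Qed.

Lemma Cmod_le_compat (a b a' b' : R) : Rabs a <= Rabs a' -> Rabs b <= Rabs b' ->
  Cmod (a, b) <= Cmod (a', b').
Proof.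
move=> Ha Hb; rewrite /Cmod; cbn [fst snd]; apply: sqrt_le_1_alt.
rewrite -(pow2_abs a) -(pow2_abs b) -(pow2_abs a') -(pow2_abs b').
by have := Rabs_pos a; have := Rabs_pos b; nra.
Qed.

Lemma Cmod_shrink_re (t : R) (u : C) : 0 <= t <= 1 -> Cmod (t * fst u, 0) <= Cmod u.
Proof.
move=> Ht; rewrite [u in Cmod u]surjective_pairing; apply: Cmod_le_compat; last first.
  by rewrite Rabs_R0; apply: Rabs_pos.
by rewrite Rabs_mult (Rabs_pos_eq t); [have := Rabs_pos (fst u); nra | lra].
Qed.

Lemma Cmod_shrink_im (t : R) (u : C) : 0 <= t <= 1 -> Cmod (fst u, t * snd u) <= Cmod u.
Proof.
move=> Ht; rewrite [u in Cmod u]surjective_pairing; apply: Cmod_le_compat; first exact: Rle_refl.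
by rewrite Rabs_mult (Rabs_pos_eq t); [have := Rabs_pos (snd u); nra | lra].
Qed.

Lemma Cmod_eq0_of_small (x : C) : (forall e, 0 < e -> Cmod x < e) -> x = 0%C.
Proof.
move=> H; apply: Cmod_eq_0; have := Cmod_ge_0 x.
case: (Req_dec (Cmod x) 0) => // Hx h; have := H (Cmod x); lra.
Qed.

Lemma RtoC_minus (a b : R) : RtoC (a - b) = (RtoC a - RtoC b)%C.
Proof. by apply: injective_projections => /=; ring. Qed.

Lemma RtoC_INRS (k : nat) : RtoC (INR k.+1) = (RtoC (INR k) + 1)%C.
Proof. by rewrite S_INR; apply: injective_projections => /=; ring. Qed.

Lemma RtoC_neq0 (h : R) : h <> 0 -> RtoC h <> 0%C.
Proof. by move=> Hh [E]. Qed.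

Lemma Cmult_eq0 (a b : C) : (a * b)%C = 0%C -> a = 0%C \/ b = 0%C.
Proof.
move=> E; have : Cmod a * Cmod b = 0 by rewrite -Cmod_mult E Cmod_0.
by case/Rmult_integral => H; [left | right]; apply: Cmod_eq_0.
Qed.

(** * Limits of complex-valued functions along filters *)

Definition Clim {T : Type} (F : (T -> Prop) -> Prop) (f : T -> C) (l : C) :=
  forall eps, 0 < eps -> F (fun x => Cmod (f x - l) < eps).

Section CLimits.
Context {T : Type} {F : (T -> Prop) -> Prop} {HF : Filter F}.

Lemma Clim_const (c : C) : Clim F (fun _ => c) c.
Proof. by move=> e he; apply: filter_forall => _; rewrite Cmod_sub_diag. Qed.

Lemma Clim_ext (f g : T -> C) (l : C) : F (fun x => f x = g x) -> Clim F f l -> Clim F g l.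
Proof. by move=> Hfg Hf e he; apply: filter_imp (filter_and _ _ Hfg (Hf e he)) => x [<-]. Qed.

Lemma Clim_lipschitz (f g : T -> C) (l m : C) M : 0 <= M ->
  F (fun x => Cmod (g x - m) <= M * Cmod (f x - l)) -> Clim F f l -> Clim F g m.
Proof.
move=> HM Hb Hf e he.
have he' : 0 < e / (M + 1) by apply: Rdiv_lt_0_compat; lra.
apply: filter_imp (filter_and _ _ Hb (Hf _ he')) => x [H1 H2].
have : M * (e / (M + 1)) < e by apply: (Rmult_lt_reg_r (M + 1)); [lra | field_simplify; lra].
have : M * Cmod (f x - l) <= M * (e / (M + 1)) by apply: Rmult_le_compat_l; lra.
lra.
Qed.

Lemma Clim_plus (f g : T -> C) (l m : C) :
  Clim F f l -> Clim F g m -> Clim F (fun x => f x + g x)%C (l + m)%C.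
Proof.
move=> Hf Hg e he.
apply: filter_imp (filter_and _ _ (Hf (e/2) _) (Hg (e/2) _)) => [x [H1 H2]||]; try lra.
rewrite (_ : (f x + g x - (l + m) = (f x - l) + (g x - m))%C); last ring.
by have := Cmod_triangle (f x - l) (g x - m); lra.
Qed.

Lemma Clim_opp (f : T -> C) (l : C) : Clim F f l -> Clim F (fun x => - f x)%C (- l)%C.
Proof.
move=> Hf e he; apply: filter_imp (Hf e he) => x.
by rewrite (_ : (- f x - - l = - (f x - l))%C) ?Cmod_opp //; ring.
Qed.

Lemma Clim_mult (f g : T -> C) (l m : C) :
  Clim F f l -> Clim F g m -> Clim F (fun x => f x * g x)%C (l * m)%C.
Proof.
move=> Hf Hg e he.
set L := Cmod l; set M := Cmod m.
have HL : 0 <= L := Cmod_ge_0 _; have HM : 0 <= M := Cmod_ge_0 _.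
set d := Rmin 1 (e / (L + M + 1)).
have hd : 0 < d by apply: Rmin_pos; [lra | apply: Rdiv_lt_0_compat; lra].
have hd1 : d <= 1 := Rmin_l _ _.
have hd2 : d * (L + M + 1) <= e.
{ apply: (Rle_trans _ (e / (L + M + 1) * (L + M + 1))); last by right; field; lra.
  by apply: Rmult_le_compat_r; [lra | apply: Rmin_r]. }
apply: filter_imp (filter_and _ _ (Hf _ hd) (Hg _ hd)) => x [H1 H2].
rewrite (_ : (f x * g x - l * m
  = (f x - l) * (g x - m) + l * (g x - m) + (f x - l) * m)%C); last ring.
set a := Cmod (f x - l) in H1; set b := Cmod (g x - m) in H2.
have ha : 0 <= a := Cmod_ge_0 _; have hb : 0 <= b := Cmod_ge_0 _.
apply: (Rle_lt_trans _ (a * b + L * b + a * M)).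
{ have := Cmod_triangle ((f x - l) * (g x - m) + l * (g x - m)) ((f x - l) * m).
  have := Cmod_triangle ((f x - l) * (g x - m)) (l * (g x - m)).
  rewrite !Cmod_mult -/a -/b -/L -/M; lra. }
have : a * b <= a by nra.
have : L * b <= L * d by nra.
have : a * M <= d * M by nra.
nra.
Qed.

Lemma Clim_inv (f : T -> C) (l : C) : l <> 0%C -> Clim F f l -> Clim F (fun x => / f x)%C (/ l)%C.
Proof.
move=> Hl Hf e he.
have HL : 0 < Cmod l by apply/Cmod_gt_0.
set d := Rmin (Cmod l / 2) (e * (Cmod l * Cmod l) / 2).
have hd : 0 < d.
  by apply: Rmin_pos; [lra | apply: Rdiv_lt_0_compat; [apply: Rmult_lt_0_compat; nra | lra]].
apply: filter_imp (Hf _ hd) => x H1.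
have hd1 : d <= Cmod l / 2 := Rmin_l _ _.
have hd2 : d <= e * (Cmod l * Cmod l) / 2 := Rmin_r _ _.
have hfx : Cmod l / 2 <= Cmod (f x) by have := Cmod_sub_rev l (f x); rewrite Cmod_sub_sym; lra.
have fx0 : f x <> 0%C by apply/Cmod_gt_0; lra.
rewrite (_ : (/ f x - / l = - (f x - l) / (f x * l))%C); last by field.
rewrite Cmod_div ?Cmod_opp ?Cmod_mult; last exact: Cmult_neq_0.
apply: (Rmult_lt_reg_r (Cmod (f x) * Cmod l)); first nra.
field_simplify; nra.
Qed.

Lemma Clim_conj (f : T -> C) (l : C) : Clim F f l -> Clim F (fun x => Cconj (f x)) (Cconj l).
Proof.
apply: Clim_lipschitz (Rle_0_1) _; apply: filter_forall => x.
by rewrite (_ : (Cconj (f x) - Cconj l = Cconj (f x - l))%C) ?Cmod_conj;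
  [lra | apply: injective_projections => /=; ring].
Qed.

Lemma Clim_Cmod (f : T -> C) (l : C) : Clim F f l -> Clim F (fun x => RtoC (Cmod (f x))) (RtoC (Cmod l)).
Proof.
apply: Clim_lipschitz (Rle_0_1) _; apply: filter_forall => x.
by rewrite -RtoC_minus Cmod_R; have := Rabs_Cmod_sub (f x) l; lra.
Qed.

End CLimits.

Definition radius_filter {T} (B : R -> T -> Prop) : (T -> Prop) -> Prop :=
  fun P => exists d, 0 < d /\ forall x, B d x -> P x.

Lemma radius_filter_Filter {T} (B : R -> T -> Prop) :
  (forall d d' x, d <= d' -> B d x -> B d' x) -> Filter (radius_filter B).
Proof.
move=> Bmono; split.
- by exists 1; split; [lra | done].
- move=> P Q [d1 [h1 H1]] [d2 [h2 H2]]; exists (Rmin d1 d2); split; first exact: Rmin_pos.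
  by move=> x Bx; split; [apply: H1 | apply: H2]; apply: Bmono Bx; [apply: Rmin_l | apply: Rmin_r].
- by move=> P Q HPQ [d [hd H]]; exists d; split => // x /H /HPQ.
Qed.

Lemma Rmult_le_div_succ (A K e c : R) : 0 <= A -> 0 <= K -> 0 < c ->
  e <= A / (c * (K + 1)) -> e * K <= A / c.
Proof.
move=> HA HK Hc He; apply: (Rle_trans _ (A / (c * (K + 1)) * K)); first exact: Rmult_le_compat_r.
apply: (Rmult_le_reg_r (c * (K + 1))); first nra.
rewrite (_ : A / (c * (K + 1)) * K * (c * (K + 1)) = A * K); last by field; lra.
rewrite (_ : A / c * (c * (K + 1)) = A * (K + 1)); last by field; lra.
nra.
Qed.

(** * Power sums and their divided differences *)

(* [pow_dq n a b] is the divided difference (a^n - b^n) / (a - b), as a polynomial. *)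
Fixpoint pow_dq (n : nat) (a b : C) : C :=
  if n is k.+1 then (a ^ k + b * pow_dq k a b)%C else 0%C.

Lemma Cpow_sub (n : nat) (a b : C) : (a ^ n - b ^ n = (a - b) * pow_dq n a b)%C.
Proof.
elim: n => [|k IH] /=; first ring.
transitivity ((a - b) * a ^ k + b * (a ^ k - b ^ k))%C; first ring.
by rewrite IH; ring.
Qed.

Lemma Cmult_INR_pow_pred (k : nat) (t : C) :
  (t * (RtoC (INR k) * t ^ k.-1) = RtoC (INR k) * t ^ k)%C.
Proof. by case: k => [|k] /=; ring. Qed.

Lemma pow_dq_diag (n : nat) (t : C) : pow_dq n t t = (RtoC (INR n) * t ^ n.-1)%C.
Proof.
elim: n => [|k IH] /=; first ring.
by rewrite IH Cmult_INR_pow_pred RtoC_INRS; ring.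
Qed.

Lemma Cmod_pow_le (a : C) (n : nat) (B : R) : 0 <= B -> Cmod a <= B -> Cmod (a ^ n) <= B ^ n.
Proof. by move=> HB Ha; rewrite Cmod_pow; apply: pow_incr; split => //; apply: Cmod_ge_0. Qed.

Section PowerBounds.
Variables (B : R) (a b : C).
Hypotheses (HB : 1 <= B) (Ha : Cmod a <= B) (Hb : Cmod b <= B).

Lemma Cmod_pow_dq_le (n : nat) : Cmod (pow_dq n a b) <= INR n * B ^ n.
Proof.
elim: n => [|k IH]; first by rewrite /= Cmod_0; lra.
rewrite S_INR /=; apply: Rle_trans (Cmod_triangle _ _) _; rewrite Cmod_mult.
have h1 := @Cmod_pow_le a k B ltac:(lra) Ha.
have h2 : 1 <= B ^ k by apply: pow_R1_Rle.
have h3 : Cmod b * Cmod (pow_dq k a b) <= B * (INR k * B ^ k).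
  by apply: Rmult_le_compat => //; apply: Cmod_ge_0.
have := pos_INR k; nra.
Qed.

Lemma Cpow_lipschitz (n : nat) : Cmod (a ^ n - b ^ n) <= INR n * B ^ n * Cmod (a - b).
Proof.
rewrite Cpow_sub Cmod_mult; have := Cmod_pow_dq_le n; have := Cmod_ge_0 (a - b); nra.
Qed.

End PowerBounds.

Lemma pow_dq_lipschitz (n : nat) (a b a' b' : C) (B : R) :
  1 <= B -> Cmod a <= B -> Cmod b <= B -> Cmod a' <= B -> Cmod b' <= B ->
  Cmod (pow_dq n a b - pow_dq n a' b') <=
  INR n * INR n * B ^ n * (Cmod (a - a') + Cmod (b - b')).
Proof.
move=> HB Ha Hb Ha' Hb'; elim: n => [|k IH]; first by rewrite /= Cmod_sub_diag; lra.
rewrite S_INR /= (_ : (a ^ k + b * pow_dq k a b - (a' ^ k + b' * pow_dq k a' b') =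
  (a ^ k - a' ^ k) + (b - b') * pow_dq k a b + b' * (pow_dq k a b - pow_dq k a' b'))%C); last ring.
apply: Rle_trans (Cmod_triangle _ _) _.
apply: Rle_trans (Rplus_le_compat_r _ _ _ (Cmod_triangle _ _)) _.
rewrite !Cmod_mult.
have h1 := Cpow_lipschitz HB Ha Ha' k.
have h2 := Cmod_pow_dq_le HB Ha Hb k.
have h0 := pos_INR k; have hBk : 1 <= B ^ k by apply: pow_R1_Rle.
have e1 := Cmod_ge_0 (a - a'); have e2 := Cmod_ge_0 (b - b').
have e4 := Cmod_ge_0 (pow_dq k a b - pow_dq k a' b').
set S := Cmod (a - a') + Cmod (b - b') in IH *; set P := B ^ k in h1 h2 hBk IH *.
have h3 : Cmod (b - b') * Cmod (pow_dq k a b) <= Cmod (b - b') * (INR k * P)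
  by apply: Rmult_le_compat_l.
have h4 : Cmod b' * Cmod (pow_dq k a b - pow_dq k a' b') <= B * (INR k * INR k * P * S).
  by apply: Rmult_le_compat => //; apply: Cmod_ge_0.
have hS : 0 <= S by rewrite /S; lra.
have hkPS : 0 <= INR k * P * S by apply: Rmult_le_pos; [apply: Rmult_le_pos|]; lra.
have : INR k * P * S <= B * (INR k * P * S) by nra.
have hBPS : 0 <= B * P * S by apply: Rmult_le_pos; [apply: Rmult_le_pos|]; lra.
have : 0 <= INR k * (B * P * S) by apply: Rmult_le_pos.
have : INR k * P * Cmod (a - a') + Cmod (b - b') * (INR k * P) <= INR k * P * S by rewrite /S; nra.
lra.
Qed.

Lemma Clim_Cpow {T} {F : (T -> Prop) -> Prop} {HF : Filter F} (f : T -> C) (l : C) (B : R) (n : nat) :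
  1 <= B -> F (fun x => Cmod (f x) <= B) -> Cmod l <= B -> Clim F f l ->
  Clim F (fun x => f x ^ n)%C (l ^ n)%C.
Proof.
move=> HB Hb Hl; apply: (Clim_lipschitz (M := INR n * B ^ n)).
  by apply: Rmult_le_pos; [apply: pos_INR | apply: pow_le; lra].
by apply: filter_imp Hb => x Hx; apply: Cpow_lipschitz.
Qed.

Section PowerSums.
Variable N : nat.
Implicit Types (z w : CN N) (a : 'I_N -> C) (n : 'I_N -> nat).

Lemma Csum_sub (G H : 'I_N -> C) :
  \big[Cplus/RtoC 0]_(i < N) (G i - H i)%C =
  (\big[Cplus/RtoC 0]_(i < N) G i - \big[Cplus/RtoC 0]_(i < N) H i)%C.
Proof.
rewrite big_split /=; congr Cplus.
by rewrite (big_endo Copp) //; [move=> x y; ring | ring].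
Qed.

Lemma Csum_scal (c : C) (G : 'I_N -> C) :
  \big[Cplus/RtoC 0]_(i < N) (c * G i)%C = (c * \big[Cplus/RtoC 0]_(i < N) G i)%C.
Proof. by rewrite (big_endo (Cmult c)) //; [move=> x y; ring | ring]. Qed.

Lemma Cmod_Csum_le (G : 'I_N -> C) :
  Cmod (\big[Cplus/RtoC 0]_(i < N) G i) <= \big[Rplus/0]_(i < N) Cmod (G i).
Proof.
apply: (big_ind2 (fun x y => Cmod x <= y)).
- by rewrite Cmod_0; lra.
- by move=> x1 x2 y1 y2 h1 h2; apply: Rle_trans (Cmod_triangle _ _) _; lra.
- by move=> i _; apply: Rle_refl.
Qed.

Lemma Rsum_le (f g : 'I_N -> R) : (forall i, f i <= g i) ->
  \big[Rplus/0]_(i < N) f i <= \big[Rplus/0]_(i < N) g i.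
Proof. by move=> E; apply: (big_ind2 (fun x y => x <= y)) => //; [lra | move=> *; lra]. Qed.

Lemma Rsum_ge0 (f : 'I_N -> R) : (forall i, 0 <= f i) -> 0 <= \big[Rplus/0]_(i < N) f i.
Proof. by move=> E; apply: (big_ind (fun x => 0 <= x)) => //; [lra | move=> *; lra]. Qed.

Lemma Rsum_scal (c : R) (f : 'I_N -> R) :
  \big[Rplus/0]_(i < N) (c * f i) = c * \big[Rplus/0]_(i < N) f i.
Proof. by rewrite (big_endo (Rmult c)) //; [move=> x y; ring | ring]. Qed.

Definition powsum a n z (t : C) : C := \big[Cplus/RtoC 0]_(i < N) (z i * (a i * t ^ n i))%C.

Definition powsum_dq a n z (t1 t2 : C) : C :=
  \big[Cplus/RtoC 0]_(i < N) (z i * (a i * pow_dq (n i) t1 t2))%C.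

Lemma powsum_sub a n z t1 t2 :
  (powsum a n z t1 - powsum a n z t2 = (t1 - t2) * powsum_dq a n z t1 t2)%C.
Proof.
rewrite /powsum /powsum_dq -Csum_sub -Csum_scal; apply: eq_bigr => i _.
by transitivity (z i * a i * (t1 ^ n i - t2 ^ n i))%C; [ring | rewrite Cpow_sub; ring].
Qed.

Definition dir (b : bool) : C := if b then Ci else 1%C.

Lemma Cmod_dir b : Cmod (dir b) = 1.
Proof. by case: b; [apply: Cmod_Ci | apply: Cmod_1]. Qed.

Lemma powsum_shift a n z i b h t :
  powsum a n (shift z i b h) t = (powsum a n z t + (RtoC h * dir b) * (a i * t ^ n i))%C.
Proof.
rewrite /powsum; transitivity (\big[Cplus/RtoC 0]_(j < N) (z j * (a j * t ^ n j) +
  (if j == i then (RtoC h * dir b) * (a j * t ^ n j) else 0))%C).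
  by apply: eq_bigr => j _; rewrite /shift /dir; case: (j == i); ring.
by rewrite big_split /= -big_mkcond big_pred1_eq.
Qed.

Definition CN_close z w (d : R) := forall j, Cmod (z j - w j) <= d.

Lemma CN_close_sym z w d : CN_close z w d -> CN_close w z d.
Proof. by move=> H j; rewrite Cmod_sub_sym. Qed.

Lemma CN_close_refl z d : 0 <= d -> CN_close z z d.
Proof. by move=> Hd j; rewrite Cmod_sub_diag. Qed.

Lemma CN_close_le z w d d' : d <= d' -> CN_close z w d -> CN_close z w d'.
Proof. by move=> Hd H j; have := H j; lra. Qed.

Section Bounds.
Variables (a : 'I_N -> C) (n : 'I_N -> nat) (B : R).
Hypothesis HB : 1 <= B.

Definition coef_mass : R := \big[Rplus/0]_(i < N) (Cmod (a i) * B ^ n i).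

Definition dq_mass z0 : R :=
  \big[Rplus/0]_(i < N) (Cmod (z0 i) * (Cmod (a i) * (INR (n i) * B ^ n i))).

Definition dq_modulus z0 : R := \big[Rplus/0]_(i < N)
  (Cmod (a i) * (INR (n i) * B ^ n i + Cmod (z0 i) * (2 * (INR (n i) * INR (n i) * B ^ n i)))).

Definition powsum_modulus z0 : R := coef_mass + dq_mass z0.

Lemma coef_mass_ge0 : 0 <= coef_mass.
Proof. by apply: Rsum_ge0 => i; apply: Rmult_le_pos; [apply: Cmod_ge_0 | apply: pow_le; lra]. Qed.

Lemma dq_mass_ge0 z0 : 0 <= dq_mass z0.
Proof.
apply: Rsum_ge0 => i; have := pos_INR (n i); have := pow_le B (n i) ltac:(lra).
have := Cmod_ge_0 (z0 i); have := Cmod_ge_0 (a i); move=> *.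
by apply: Rmult_le_pos => //; apply: Rmult_le_pos => //; apply: Rmult_le_pos.
Qed.

Lemma dq_modulus_ge0 z0 : 0 <= dq_modulus z0.
Proof.
apply: Rsum_ge0 => i; have h1 := pos_INR (n i); have h2 := pow_le B (n i) ltac:(lra).
have := Cmod_ge_0 (z0 i); have := Cmod_ge_0 (a i); move=> *.
apply: Rmult_le_pos => //; apply: Rplus_le_le_0_compat; first exact: Rmult_le_pos.
by apply: Rmult_le_pos => //; apply: Rmult_le_pos; [lra | apply: Rmult_le_pos => //; nra].
Qed.

Lemma powsum_modulus_ge0 z0 : 0 <= powsum_modulus z0.
Proof. by have := coef_mass_ge0; have := dq_mass_ge0 z0; rewrite /powsum_modulus; lra. Qed.

Lemma powsum_lipschitz_z z w t d : Cmod t <= B -> CN_close z w d ->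
  Cmod (powsum a n z t - powsum a n w t) <= d * coef_mass.
Proof.
move=> Ht Hd; rewrite /powsum /coef_mass -Csum_sub -Rsum_scal.
apply: Rle_trans (Cmod_Csum_le _) _; apply: Rsum_le => i.
rewrite (_ : (z i * (a i * t ^ n i) - w i * (a i * t ^ n i) = (z i - w i) * a i * t ^ n i)%C);
  last ring.
rewrite !Cmod_mult; have := Hd i; have := @Cmod_pow_le t (n i) B ltac:(lra) Ht.
have := Cmod_ge_0 (z i - w i); have := Cmod_ge_0 (a i); have := Cmod_ge_0 (t ^ n i)%C.
have := pow_le B (n i) ltac:(lra); move=> *.
apply: (Rle_trans _ (Cmod (z i - w i) * Cmod (a i) * B ^ n i)).
  by apply: Rmult_le_compat_l => //; apply: Rmult_le_pos.
by rewrite Rmult_assoc; apply: Rmult_le_compat_r => //; apply: Rmult_le_pos.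
Qed.

Lemma Cmod_powsum_dq_le z0 t c : Cmod t <= B -> Cmod c <= B ->
  Cmod (powsum_dq a n z0 t c) <= dq_mass z0.
Proof.
move=> Ht Hc; apply: Rle_trans (Cmod_Csum_le _) _; apply: Rsum_le => i.
rewrite !Cmod_mult; have := Cmod_pow_dq_le HB Ht Hc (n i).
by have := Cmod_ge_0 (z0 i); have := Cmod_ge_0 (a i); move=> *;
  do 2 apply: Rmult_le_compat_l => //.
Qed.

Lemma powsum_dq_cont z z0 t1 t2 c e : Cmod t1 <= B -> Cmod t2 <= B -> Cmod c <= B ->
  CN_close z z0 e -> Cmod (t1 - c) <= e -> Cmod (t2 - c) <= e ->
  Cmod (powsum_dq a n z t1 t2 - powsum_dq a n z0 c c) <= e * dq_modulus z0.
Proof.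
move=> H1 H2 Hc Hz He1 He2; rewrite /powsum_dq /dq_modulus -Csum_sub -Rsum_scal.
apply: Rle_trans (Cmod_Csum_le _) _; apply: Rsum_le => i.
rewrite (_ : (z i * (a i * pow_dq (n i) t1 t2) - z0 i * (a i * pow_dq (n i) c c) =
  a i * ((z i - z0 i) * pow_dq (n i) t1 t2 +
         z0 i * (pow_dq (n i) t1 t2 - pow_dq (n i) c c)))%C); last ring.
rewrite Cmod_mult.
set m := INR (n i) * B ^ n i; set mm := INR (n i) * INR (n i) * B ^ n i.
have hm := Cmod_pow_dq_le HB H1 H2 (n i).
have hl := pow_dq_lipschitz (n i) HB H1 H2 Hc Hc.
have hz := Hz i; have he : 0 <= e by apply: Rle_trans He1; apply: Cmod_ge_0.
have g1 := Cmod_ge_0 (a i); have g2 := Cmod_ge_0 (z i - z0 i); have g3 := Cmod_ge_0 (z0 i).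
have g4 := Cmod_ge_0 (pow_dq (n i) t1 t2).
have g6 : 0 <= m by apply: Rmult_le_pos; [apply: pos_INR | apply: pow_le; lra].
have g7 : 0 <= mm by apply: Rmult_le_pos; [apply: Rmult_le_pos; apply: pos_INR | apply: pow_le; lra].
apply: (Rle_trans _ (Cmod (a i) * (e * (m + Cmod (z0 i) * (2 * mm))))); last by right; ring.
apply: Rmult_le_compat_l => //; apply: Rle_trans (Cmod_triangle _ _) _; rewrite !Cmod_mult.
have k1 : Cmod (z i - z0 i) * Cmod (pow_dq (n i) t1 t2) <= e * m by apply: Rmult_le_compat.
have k2 : Cmod (z0 i) * Cmod (pow_dq (n i) t1 t2 - pow_dq (n i) c c) <= Cmod (z0 i) * (mm * (2 * e)).
  by apply: Rmult_le_compat_l => //; apply: Rle_trans hl _; apply: Rmult_le_compat_l => //; lra.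
nra.
Qed.

Lemma powsum_cont z z0 t c e : Cmod t <= B -> Cmod c <= B ->
  CN_close z z0 e -> Cmod (t - c) <= e ->
  Cmod (powsum a n z t - powsum a n z0 c) <= e * powsum_modulus z0.
Proof.
move=> Ht Hc Hz He.
rewrite (_ : (powsum a n z t - powsum a n z0 c =
  (powsum a n z t - powsum a n z0 t) + (powsum a n z0 t - powsum a n z0 c))%C); last ring.
rewrite powsum_sub; apply: Rle_trans (Cmod_triangle _ _) _.
rewrite Cmod_mult /powsum_modulus Rmult_plus_distr_l.
apply: Rplus_le_compat; first exact: powsum_lipschitz_z.
by apply: Rmult_le_compat => //; [apply: Cmod_ge_0 | apply: Cmod_ge_0 | apply: Cmod_powsum_dq_le].
Qed.

End Bounds.
End PowerSums.

(** * A contraction principle in C *)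

Lemma C_cauchy_cvg (t : nat -> C) :
  (forall e, 0 < e -> exists M, forall n m, (M <= n)%coq_nat -> (M <= m)%coq_nat ->
     Cmod (t n - t m) < e) ->
  exists l, forall e, 0 < e -> exists M, forall n, (M <= n)%coq_nat -> Cmod (t n - l) < e.
Proof.
move=> Ht.
have Cre : Cauchy_crit (fun k => fst (t k)).
{ move=> e /Ht [M HM]; exists M => n m Hn Hm; apply: Rle_lt_trans (HM n m Hn Hm).
  exact: re_le_Cmod (t n - t m)%C. }
have Cim : Cauchy_crit (fun k => snd (t k)).
{ move=> e /Ht [M HM]; exists M => n m Hn Hm; apply: Rle_lt_trans (HM n m Hn Hm).
  by apply: Rle_trans (Rmax_Cmod (t n - t m)%C); apply: Rmax_r. }
have [l1 Hl1] := Rcomplete.R_complete _ Cre; have [l2 Hl2] := Rcomplete.R_complete _ Cim.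
exists (l1, l2) => e he.
have [M1 HM1] := Hl1 (e / 2) ltac:(lra); have [M2 HM2] := Hl2 (e / 2) ltac:(lra).
exists (M1 + M2)%coq_nat => n Hn; apply: Rle_lt_trans (Cmod_le_Rabs_sum _) _.
by move: (HM1 n ltac:(lia)) (HM2 n ltac:(lia)); rewrite /Rdist /= /Rminus; lra.
Qed.

Section Contraction.
Variables (G : C -> C) (c : C) (r : R).
Hypotheses (Hr : 0 < r) (HG0 : Cmod (G c - c) <= r / 2)
  (HG : forall a b, Cmod (a - c) <= r -> Cmod (b - c) <= r -> Cmod (G a - G b) <= Cmod (a - b) / 2).

Let iter k := Nat.iter k G c.

Lemma contraction_steps k :
  Cmod (iter k.+1 - iter k) <= r / 2 * (/ 2) ^ k /\ Cmod (iter k - c) <= r * (1 - (/ 2) ^ k).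
Proof.
elim: k => [|k [IH1 IH2]]; first by rewrite /= Cmod_sub_diag; lra.
have hp : 0 < (/ 2) ^ k by apply: pow_lt; lra.
have Epow : (/ 2) ^ k.+1 = / 2 * (/ 2) ^ k by [].
have Hk1 : Cmod (iter k.+1 - c) <= r * (1 - (/ 2) ^ k.+1).
  by apply: Rle_trans (Cmod_sub_triangle _ (iter k) _) _; rewrite Epow; lra.
have hp1 : 0 < (/ 2) ^ k.+1 by apply: pow_lt; lra.
split => //; change (Cmod (G (iter k.+1) - G (iter k)) <= r / 2 * (/ 2) ^ k.+1).
apply: Rle_trans; first by apply: HG; nra.
by rewrite Epow; lra.
Qed.

Lemma contraction_iter_in_disc k : Cmod (iter k - c) <= r.
Proof. have [_ h] := contraction_steps k; have : 0 < (/ 2) ^ k by apply: pow_lt; lra. nra. Qed.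

Lemma contraction_cauchy n j :
  Cmod (iter (n + j)%coq_nat - iter n) <= r * ((/ 2) ^ n - (/ 2) ^ (n + j)%coq_nat).
Proof.
elim: j => [|j IH]; first by rewrite Nat.add_0_r Cmod_sub_diag; lra.
rewrite Nat.add_succ_r; apply: Rle_trans (Cmod_sub_triangle _ (iter (n + j)%coq_nat) _) _.
have [h _] := contraction_steps (n + j)%coq_nat.
by rewrite (_ : (/ 2) ^ (n + j)%coq_nat.+1 = / 2 * (/ 2) ^ (n + j)%coq_nat) //; lra.
Qed.

Lemma contraction_fixpoint : exists a, Cmod (a - c) <= r /\ G a = a.
Proof.
have [l Hl] : exists l, forall e, 0 < e -> exists M, forall n, (M <= n)%coq_nat -> Cmod (iter n - l) < e.
{ apply: C_cauchy_cvg => e he.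
  have [M HM] : exists M, forall n, (n >= M)%coq_nat -> Rabs ((/ 2) ^ n) < e / r.
    by apply: pow_lt_1_zero; [rewrite Rabs_pos_eq; lra | apply: Rdiv_lt_0_compat].
  have key n j : (M <= n)%coq_nat -> Cmod (iter (n + j)%coq_nat - iter n) < e.
  { move=> Hn; apply: Rle_lt_trans (contraction_cauchy _ _) _.
    have := HM n Hn; rewrite Rabs_pos_eq; last by apply: pow_le; lra.
    have := pow_lt (/ 2) (n + j)%coq_nat ltac:(lra).
    move=> h1 h2; have -> : e = r * (e / r) by field; lra.
    by apply: Rmult_lt_compat_l => //; lra. }
  exists M => n m Hn Hm; case: (Nat.le_ge_cases n m).
  - case/Nat.le_exists_sub => j [-> _]; rewrite Cmod_sub_sym Nat.add_comm; exact: key.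
  - case/Nat.le_exists_sub => j [-> _]; rewrite Nat.add_comm; exact: key. }
have Hlc : Cmod (l - c) <= r.
{ apply: Rnot_lt_le => Hlt; have [M HM] := Hl (Cmod (l - c) - r) ltac:(lra).
  have h1 := Cmod_sub_triangle l (iter M) c; have h2 := HM M (le_n M).
  have h3 := contraction_iter_in_disc M; rewrite Cmod_sub_sym in h2; lra. }
exists l; split => //.
have E : (G l - l)%C = 0%C.
{ apply: Cmod_eq0_of_small => e he; have [M HM] := Hl (e / 2) ltac:(lra).
  apply: Rle_lt_trans (Cmod_sub_triangle _ (G (iter M)) _) _.
  have h1 := HG Hlc (contraction_iter_in_disc M).
  have h2 : Cmod (G (iter M) - l) < e / 2 := HM M.+1 ltac:(lia).
  have h3 := HM M (le_n M); rewrite Cmod_sub_sym in h3; lra. }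
by transitivity ((G l - l) + l)%C; [ring | rewrite E; ring].
Qed.
End Contraction.

(** * Calculus along the real coordinate directions of C^N *)

Definition punctured0 : (R -> Prop) -> Prop := radius_filter (fun d h => 0 < Rabs h < d).

Instance punctured0_filter : Filter punctured0.
Proof. by apply: radius_filter_Filter => d d' h Hd [h1 h2]; split; lra. Qed.

Lemma Clim_RtoC0 : Clim punctured0 RtoC (RtoC 0).
Proof. by move=> e he; exists e; split => // h [_ Hh]; rewrite (_ : (h - 0 = h)%C) ?Cmod_R //; ring. Qed.

Definition near (t0 : R) : (R -> Prop) -> Prop := radius_filter (fun d t => Rabs (t - t0) < d).

Instance near_filter t0 : Filter (near t0).
Proof. by apply: radius_filter_Filter => d d' t; lra. Qed.

Lemma norm_C (x : C) : @norm R_AbsRing C_R_NormedModule x = Cmod x.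
Proof.
rewrite /norm /= /prod_norm /Cmod /=.
change (@norm R_AbsRing R_NormedModule (fst x)) with (Rabs (fst x)).
change (@norm R_AbsRing R_NormedModule (snd x)) with (Rabs (snd x)).
by rewrite !Rmult_1_r -!Rabs_mult !Rabs_right //; apply: Rle_ge; apply: Rle_0_sqr.
Qed.

Lemma ball0_R (d y : R) : ball 0 d y <-> Rabs y < d.
Proof. by rewrite /ball /= /AbsRing_ball /abs /= /minus /plus /opp /= Ropp_0 Rplus_0_r. Qed.

Lemma Clim_is_derive (f : R -> C) (l : C) :
  Clim punctured0 (fun h => ((f h - f 0) / RtoC h)%C) l ->
  @is_derive R_AbsRing C_R_NormedModule f 0 l.
Proof.
move=> Hc; split; first exact: is_linear_scal_l.
move=> x /is_filter_lim_locally_unique <- eps.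
have [d [hd Hd]] := Hc eps (cond_pos eps); exists (mkposreal d hd) => y /ball0_R Hy.
rewrite !norm_C; set S := (scal _ _).
have -> : S = (RtoC (y - 0) * l)%C.
  by apply: injective_projections; rewrite /S /= /scal /= /mult /= /minus /plus /opp /=; ring.
change (Cmod (f y - f 0 - RtoC (y - 0) * l) <= eps * Rabs (y - 0)); rewrite Rminus_0_r.
case: (Req_dec y 0) => [->|Hy0].
  by rewrite (_ : (f 0 - f 0 - RtoC 0 * l = 0)%C) ?Cmod_0 ?Rabs_R0; [lra | ring].
have hy : 0 < Rabs y by apply: Rabs_pos_lt.
rewrite (_ : (f y - f 0 - RtoC y * l = RtoC y * ((f y - f 0) / RtoC y - l))%C); last first.
  by field; apply: RtoC_neq0.
rewrite Cmod_mult Cmod_R Rmult_comm; apply: Rmult_le_compat_r; first lra.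
by apply: Rlt_le; apply: Hd.
Qed.

Section Shifts.
Variable N : nat.
Implicit Types (z w zc : CN N).

Lemma shift0 z i b : shift z i b 0 = z.
Proof. by apply: functional_extensionality => j; rewrite /shift; case: (j == i) => //; ring. Qed.

Lemma shift_shift z i b h k : shift (shift z i b h) i b k = shift z i b (h + k).
Proof.
apply: functional_extensionality => j; rewrite /shift.
by case: (j == i) => //; rewrite RtoC_plus; ring.
Qed.

Lemma shift_at z i b h : shift z i b h i = (z i + RtoC h * dir b)%C.
Proof. by rewrite /shift eqxx. Qed.

Lemma CN_close_shift z i b h : CN_close (shift z i b h) z (Rabs h).
Proof.
move=> j; rewrite /shift; case: (j == i); last by rewrite Cmod_sub_diag; apply: Rabs_pos.
by rewrite (_ : (z j + RtoC h * _ - z j = RtoC h * dir b)%C) ?Cmod_mult ?Cmod_dir ?Cmod_R;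
  [lra | rewrite /dir; ring].
Qed.

Lemma CN_ball_close z w d : CN_ball z d w -> CN_close w z d.
Proof. by move=> H j; apply: Rlt_le; apply: H. Qed.

Lemma CN_ball_shift zc r z i b : CN_ball zc r z ->
  exists d, 0 < d /\ forall h, Rabs h < d -> CN_ball zc r (shift z i b h).
Proof.
move=> Hz; exists (r - Cmod (z i - zc i)); split; first by have := Hz i; lra.
move=> h Hh j; case E: (j == i); last by rewrite /shift E; apply: Hz.
move/eqP: E => ->; apply: Rle_lt_trans (Cmod_sub_triangle _ (z i) _) _.
have := CN_close_shift z i b h i; rewrite shift_at; lra.
Qed.

Lemma finite_max_lt (f : 'I_N -> R) (r : R) : 0 < r -> (forall j, f j < r) ->
  exists m, m < r /\ forall j, f j <= m.
Proof.
move=> Hr Hf.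
suff [m [hm Hm]] : exists m, m < r /\ forall j, j \in index_enum 'I_N -> f j <= m.
  by exists m; split => // j; apply: Hm; rewrite mem_index_enum.
elim: (index_enum 'I_N) => [|a l [m [hm Hm]]]; first by exists 0.
exists (Rmax (f a) m); split; first exact: Rmax_lub_lt.
move=> j; rewrite in_cons => /orP [/eqP ->|/Hm Hj]; first exact: Rmax_l.
by apply: Rle_trans Hj _; apply: Rmax_r.
Qed.

Lemma CN_ball_open zc r : 0 < r -> CN_open (CN_ball zc r).
Proof.
move=> Hr z Hz; have [m [hm Hm]] := @finite_max_lt (fun j => Cmod (z j - zc j)) r Hr Hz.
exists (r - m); split; first lra.
by move=> w Hw j; apply: Rle_lt_trans (Cmod_sub_triangle _ (z j) _) _; have := Hw j; have := Hm j; lra.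
Qed.

Definition near_in (O : CN N -> Prop) (z0 : CN N) : (CN N -> Prop) -> Prop :=
  radius_filter (fun d w => O w /\ CN_ball z0 d w).

#[global] Instance near_in_filter O z0 : Filter (near_in O z0).
Proof.
by apply: radius_filter_Filter => d d' w Hd [Ow Bw]; split => // j; apply: Rlt_le_trans (Bw j) Hd.
Qed.

Lemma C1_on_of_Clim (O : CN N -> Prop) (f : CN N -> C) (D : CN N -> 'I_N -> bool -> C) :
  (forall z i b, O z -> Clim punctured0 (fun h => ((f (shift z i b h) - f z) / RtoC h)%C) (D z i b)) ->
  (forall z i b, O z -> Clim (near_in O z) (fun w => D w i b) (D z i b)) ->
  C1_on f O.
Proof.
move=> Hd Hc; exists (fun i b z => D z i b); split.
- by move=> z i b Hz; apply: Clim_is_derive; rewrite shift0; apply: Hd.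
- move=> i b z Hz eps He; have [d [hd H]] := Hc z i b Hz eps He.
  by exists d; split => // w Ow Bw; rewrite norm_C; apply: H.
Qed.

End Shifts.

Lemma IVT_gap (f : R -> R) (lo hi : R) : lo < hi ->
  (forall t, 0 <= t <= 1 -> continuity_pt f t) ->
  (forall t, 0 <= t <= 1 -> f t <= lo \/ hi < f t) -> f 0 <= lo -> f 1 <= lo.
Proof.
move=> Hlh Hc Hb Hf0; case: (Hb 1 ltac:(lra)) => // H1; exfalso.
have Hc' a : 0 <= a <= 1 -> continuity_pt (fun t => f t - (lo + hi) / 2) a.
  by move=> Ha; apply: (continuity_pt_minus f (fun _ => (lo + hi) / 2) a (Hc a Ha));
    apply: continuity_pt_const.
have [t [Ht /= Et]] := Ranalysis5.IVT_interv _ 0 1 Hc' ltac:(lra) ltac:(simpl; lra) ltac:(simpl; lra).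
by case: (Hb t Ht); lra.
Qed.

Lemma continuity_pt_Cmod_sub (phi : R -> C) (c : C) (t0 : R) :
  Clim (near t0) phi (phi t0) -> continuity_pt (fun t => Cmod (phi t - c)) t0.
Proof.
move=> Hphi e he; have [d [hd Hd]] := Hphi e he; exists d; split => // t [_ Ht].
apply: Rle_lt_trans (Rabs_Cmod_sub _ _) _; rewrite (_ : (phi t - c - (phi t0 - c) = phi t - phi t0)%C);
  [exact: Hd | ring].
Qed.

Lemma is_derive_cont0 (f : R -> C) (l : C) : @is_derive R_AbsRing C_R_NormedModule f 0 l ->
  forall e, 0 < e -> exists d, 0 < d /\ forall t, Rabs t < d -> Cmod (f t - f 0) < e.
Proof.
move=> Hd e he.
have Hc := @ex_derive_continuous R_AbsRing C_R_NormedModule f 0 (ex_intro _ l Hd).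
have [[d hd] Hdd] := Hc _ (locally_ball (f 0) (mkposreal (e / 2) ltac:(lra))).
exists d; split => // t /ball0_R /Hdd.
rewrite /ball /= /prod_ball /= /ball /= /AbsRing_ball /abs /= /minus /plus /opp /= => [[h1 h2]].
by apply: Rle_lt_trans (Cmod_le_Rabs_sum _) _ => /=; lra.
Qed.

Lemma C1_on_line_Clim (N : nat) (O : CN N -> Prop) (f : CN N -> C) (w : CN N) i b (L t0 : R) :
  C1_on f O -> O (shift w i b (t0 * L)) ->
  Clim (near t0) (fun t => f (shift w i b (t * L))) (f (shift w i b (t0 * L))).
Proof.
move=> [D [HD _]] Hp e he.
have [d [hd Hd]] := is_derive_cont0 (HD _ i b Hp) he; rewrite shift0 in Hd.
exists (d / (Rabs L + 1)); split; first by apply: Rdiv_lt_0_compat => //; have := Rabs_pos L; lra.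
move=> t Ht; rewrite (_ : t * L = t0 * L + (t - t0) * L) -?shift_shift; last ring.
apply: Hd; rewrite Rabs_mult; have := Rabs_pos L; have := Rabs_pos (t - t0) => h1 h2.
have : Rabs (t - t0) * (Rabs L + 1) < d.
  apply: (Rlt_le_trans _ (d / (Rabs L + 1) * (Rabs L + 1))); first by apply: Rmult_lt_compat_r; lra.
  by right; field; lra.
nra.
Qed.

Lemma Clim_dq_components (phi : R -> C) (l : C) :
  Clim punctured0 (fun h => ((phi h - phi 0) / RtoC h)%C) l ->
  is_derive (fun h => fst (phi h)) 0 (fst l) /\ is_derive (fun h => snd (phi h)) 0 (snd l).
Proof.
move=> Hc; split; apply is_derive_Reals; move=> e he; have [d [hd Hd]] := Hc e he;
  exists (mkposreal d hd) => h Hh0 Hh; rewrite Rplus_0_l;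
  have := Hd h (conj (Rabs_pos_lt h Hh0) Hh); apply: Rle_lt_trans;
  set q := ((phi h - phi 0) / RtoC h - l)%C.
- have -> : (fst (phi h) - fst (phi 0)) / h - fst l = fst q by rewrite /q /=; field.
  exact: Rle_trans (Rmax_l _ _) (Rmax_Cmod q).
- have -> : (snd (phi h) - snd (phi 0)) / h - snd l = snd q by rewrite /q /=; field.
  exact: Rle_trans (Rmax_r _ _) (Rmax_Cmod q).
Qed.

Definition Cmod_deriv (x l : C) : R := fst (Cconj x * l * / RtoC (Cmod x))%C.

Lemma is_derive_Cmod (phi : R -> C) (l : C) : phi 0 <> 0%C ->
  Clim punctured0 (fun h => ((phi h - phi 0) / RtoC h)%C) l ->
  is_derive (fun h => Cmod (phi h)) 0 (Cmod_deriv (phi 0) l).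
Proof.
move=> H0 Hc; have [Hp Hq] := Clim_dq_components Hc.
have Hm : 0 < Cmod (phi 0) by apply/Cmod_gt_0.
have Hpos : 0 < fst (phi 0) ^ 2 + snd (phi 0) ^ 2.
  by move: Hm; rewrite /Cmod; case: (Rlt_le_dec 0 (fst (phi 0) ^ 2 + snd (phi 0) ^ 2)) => // h;
    rewrite (_ : fst (phi 0) ^ 2 + snd (phi 0) ^ 2 = 0) ?sqrt_0;
    [lra | have := pow2_ge_0 (fst (phi 0)); have := pow2_ge_0 (snd (phi 0)); lra].
have Hsq := is_derive_sqrt _ _ _
  (is_derive_plus _ _ _ _ _ (is_derive_pow _ 2 _ _ Hp) (is_derive_pow _ 2 _ _ Hq)) Hpos.
apply: (is_derive_ext (fun h => sqrt (fst (phi h) ^ 2 + snd (phi h) ^ 2))) => //.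
rewrite (_ : Cmod_deriv (phi 0) l =
  plus (INR 2 * fst l * fst (phi 0) ^ 1) (INR 2 * snd l * snd (phi 0) ^ 1) /
  (2 * sqrt (fst (phi 0) ^ 2 + snd (phi 0) ^ 2))) //.
by rewrite /Cmod_deriv /plus /=; rewrite /Cmod in Hm *; set r := sqrt _ in Hm *; field; lra.
Qed.

Lemma norm_minus_fst_le (u v : C) :
  @norm R_AbsRing R_NormedModule (minus (fst u) (fst v)) <= Cmod (u - v).
Proof. exact: re_le_Cmod (u - v)%C. Qed.

(** * The critical system F = F_y = 0 *)

(* Coquelicot's derivative rules for C are stated over [AbsRing_NormedModule C_AbsRing],
   whereas [C_derive] (hence [dyF]) is characterised over [C_NormedModule]. *)
Notation CV := (AbsRing_NormedModule C_AbsRing).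
Notation is_derive_C f y l := (@is_derive C_AbsRing CV f y l).

Lemma is_derive_C_derive (f : C -> C) (y l : C) : is_derive_C f y l -> C_derive f y = l.
Proof.
move=> [[a b [M HM]] Hd]; apply: is_C_derive_unique; split; last exact: Hd.
by split; [exact: a | exact: b | exists M].
Qed.

Lemma is_derive_C_eq (f : C -> C) (y l l' : C) : is_derive_C f y l -> l = l' -> is_derive_C f y l'.
Proof. by move=> H <-. Qed.

Lemma is_derive_C_const (c y : C) : is_derive_C (fun _ => c) y (RtoC 0).
Proof.
apply: is_derive_C_eq; first exact: (@is_derive_const C_AbsRing CV c y).
by apply: injective_projections => /=; ring.
Qed.

Lemma is_derive_Cpow (n : nat) (y : C) : is_derive_C (fun w => w ^ n)%C y (RtoC (INR n) * y ^ n.-1)%C.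
Proof.
elim: n => [|k IH]; first by apply: is_derive_C_eq; [apply: is_derive_C_const | simpl; ring].
apply: is_derive_C_eq.
  exact: (@is_derive_mult C_AbsRing (fun w => w) (fun w => w ^ k)%C y _ _
            (@is_derive_id C_AbsRing y) IH Cmult_comm).
change ((1 * y ^ k + y * (RtoC (INR k) * y ^ k.-1))%C = (RtoC (INR k.+1) * y ^ k)%C).
by rewrite Cmult_INR_pow_pred RtoC_INRS; ring.
Qed.

Lemma is_derive_Cmult_l (c : C) (f : C -> C) (y l : C) :
  is_derive_C f y l -> is_derive_C (fun w => c * f w)%C y (c * l)%C.
Proof.
move=> H; apply: is_derive_C_eq.
  exact: (@is_derive_mult C_AbsRing (fun _ => c) f y _ _ (is_derive_C_const c y) H Cmult_comm).
by change ((0 * f y + c * l)%C = (c * l)%C); ring.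
Qed.

Lemma is_derive_Csum (N : nat) (r : seq.seq 'I_N) (G : 'I_N -> C -> C) (D : 'I_N -> C) (y : C) :
  (forall i, is_derive_C (G i) y (D i)) ->
  is_derive_C (fun w => \big[Cplus/RtoC 0]_(i <- r) G i w) y (\big[Cplus/RtoC 0]_(i <- r) D i).
Proof.
move=> HD; elim: r => [|a r IH].
  apply: (@is_derive_ext C_AbsRing CV (fun _ => RtoC 0)) => [w|]; first by rewrite big_nil.
  by rewrite big_nil; apply: is_derive_C_const.
apply: (@is_derive_ext C_AbsRing CV (fun w => plus (G a w) (\big[Cplus/RtoC 0]_(i <- r) G i w))).
  by move=> w; rewrite big_cons.
by rewrite big_cons; exact: is_derive_plus (HD a) IH.
Qed.

Section CriticalEquations.
Variables (N : nat) (s : 'I_N -> nat).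
Implicit Types (z : CN N) (x y t : C).

Lemma dyF_sum z y x : dyF s z y x =
  (1 - \big[Cplus/RtoC 0]_(i < N) (z i * (x ^ s i * (RtoC (INR (s i)) * y ^ (s i).-1))))%C.
Proof.
apply: is_derive_C_derive; apply: is_derive_C_eq.
  apply: (@is_derive_minus C_AbsRing CV).
    apply: (@is_derive_minus C_AbsRing CV); first exact: (@is_derive_id C_AbsRing).
    exact: is_derive_C_const.
  by apply: is_derive_Csum => i; do 2 apply: is_derive_Cmult_l; apply: is_derive_Cpow.
by rewrite /minus /plus /opp /one /=; ring.
Qed.

Lemma dyyF_sum z y x : dyyF s z y x = (- \big[Cplus/RtoC 0]_(i < N)
  (z i * (x ^ s i * (RtoC (INR (s i)) * (RtoC (INR (s i).-1) * y ^ (s i).-2)))))%C.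
Proof.
rewrite /dyyF (functional_extensionality _ _ (fun w => dyF_sum z w x)).
apply: is_derive_C_derive; apply: is_derive_C_eq.
  apply: (@is_derive_minus C_AbsRing CV); first exact: is_derive_C_const.
  by apply: is_derive_Csum => i; do 3 apply: is_derive_Cmult_l; apply: is_derive_Cpow.
by rewrite /minus /plus /opp /=; ring.
Qed.

(* With g(t) = sum_i z_i t^(s_i) we have F(y, x) = y - 1 - g(xy); [gpoly_der] is g' and
   [Hpoly] is H(t) = t g'(t) - g(t) - 1 (lemma [Hpoly_coef]). *)
Definition coef_one (i : 'I_N) : C := 1%C.
Definition coef_s (i : 'I_N) : C := RtoC (INR (s i)).
Definition coef_s1 (i : 'I_N) : C := RtoC (INR (s i) - 1).
Definition s_pred (i : 'I_N) : nat := (s i).-1.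

Definition gpoly z t : C := powsum coef_one s z t.
Definition gpoly_der z t : C := powsum coef_s s_pred z t.
Definition Hpoly z t : C := (powsum coef_s1 s z t - 1)%C.

Hypothesis Hs1 : forall i, (1 <= s i)%coq_nat.

Lemma F_gpoly z y x : F s z y x = (y - 1 - gpoly z (x * y))%C.
Proof.
rewrite /F /gpoly /powsum; congr Cminus; apply: eq_bigr => i _.
by rewrite Cpow_mult_l /coef_one; ring.
Qed.

Lemma dyF_gpoly_der z y x : dyF s z y x = (1 - x * gpoly_der z (x * y))%C.
Proof.
rewrite dyF_sum /gpoly_der /powsum -Csum_scal; congr Cminus; apply: eq_bigr => i _.
rewrite /coef_s /s_pred; have := Hs1 i; case: (s i) => [|k] Hk; first lia.
by rewrite /= !Cpow_mult_l; ring.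
Qed.

Lemma Hpoly_coef z t : powsum coef_s1 s z t = (t * gpoly_der z t - gpoly z t)%C.
Proof.
rewrite /gpoly_der /gpoly /powsum -Csum_scal -Csum_sub; apply: eq_bigr => i _.
rewrite /coef_s1 /coef_s /coef_one /s_pred; have := Hs1 i; case: (s i) => [|k] Hk; first lia.
by rewrite /= RtoC_minus RtoC_INRS; ring.
Qed.

Lemma gpoly0 z : gpoly z 0%C = 0%C.
Proof.
rewrite /gpoly /powsum big1 // => i _; have := Hs1 i.
by case: (s i) => [|k] Hk; [lia | rewrite /=; ring].
Qed.

Lemma crit_eqs_reduce z y x : F s z y x = 0%C -> dyF s z y x = 0%C ->
  [/\ (x * gpoly_der z (x * y))%C = 1%C, y = (1 + gpoly z (x * y))%C & Hpoly z (x * y) = 0%C].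
Proof.
rewrite F_gpoly dyF_gpoly_der => E1 E2.
have Ex : (x * gpoly_der z (x * y))%C = 1%C.
  by transitivity (1 - (1 - x * gpoly_der z (x * y)))%C; [ring | rewrite E2; ring].
have Ey : y = (1 + gpoly z (x * y))%C.
  by transitivity ((y - 1 - gpoly z (x * y)) + 1 + gpoly z (x * y))%C; [ring | rewrite E1; ring].
split => //; rewrite /Hpoly Hpoly_coef.
transitivity (y * (x * gpoly_der z (x * y)) - (1 + gpoly z (x * y)))%C; first ring.
by rewrite Ex -Ey; ring.
Qed.

Lemma crit_eqs_of_root z t : Hpoly z t = 0%C -> gpoly_der z t <> 0%C ->
  let x := (/ gpoly_der z t)%C in let y := (1 + gpoly z t)%C in
  (x * y)%C = t /\ F s z y x = 0%C /\ dyF s z y x = 0%C.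
Proof.
move=> Ht Hd x y.
have Ey : y = (t * gpoly_der z t)%C.
  rewrite /y; move: Ht; rewrite /Hpoly Hpoly_coef => Ht.
  by transitivity (t * gpoly_der z t - (t * gpoly_der z t - gpoly z t - 1))%C;
    [ring | rewrite Ht; ring].
have Exy : (x * y)%C = t by rewrite Ey /x; field.
by rewrite F_gpoly dyF_gpoly_der Exy /y /x; split => //; split; [ring | field].
Qed.

Hypothesis Hs2 : forall i, (2 <= s i)%coq_nat.

Lemma dyyF_Hpoly_dq z y x :
  (y * y * dyyF s z y x = - (x * y) * powsum_dq coef_s1 s z (x * y) (x * y))%C.
Proof.
rewrite dyyF_sum /powsum_dq (_ : forall u v : C, (u * - v = - (u * v))%C); last by move=> *; ring.
rewrite (_ : forall u v : C, (- u * v = - (u * v))%C); last by move=> *; ring.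
rewrite -!Csum_scal; congr Copp; apply: eq_bigr => i _.
rewrite /coef_s1 pow_dq_diag; have := Hs2 i; case: (s i) => [|[|k]] Hk; try lia.
rewrite (_ : k.+2.-2 = k) // (_ : k.+2.-1 = k.+1) // !Cpow_S Cpow_mult_l RtoC_minus !RtoC_INRS.
ring.
Qed.

Lemma Hpoly_dq_neq0 z y x : F s z y x = 0%C -> dyF s z y x = 0%C -> dyyF s z y x <> 0%C ->
  powsum_dq coef_s1 s z (x * y) (x * y) <> 0%C.
Proof.
move=> E1 E2 E3 Hdq; have [_ Ey _] := crit_eqs_reduce E1 E2.
have : (y * y * dyyF s z y x)%C = 0%C by rewrite dyyF_Hpoly_dq Hdq; ring.
have Hy : y <> 0%C.
  move=> Hy0; move: Ey; rewrite Hy0 Cmult_0_r gpoly0 => /(f_equal fst) /=; lra.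
by case/Cmult_eq0 => [/Cmult_eq0 [] //|].
Qed.

End CriticalEquations.

(** * The critical branch near a simple critical point *)

Section ImplicitBranch.
Variables (N : nat) (s : 'I_N -> nat) (zc : CN N) (tc : C).

Definition Bt : R := Cmod tc + 1.
Definition Hder : C := powsum_dq (coef_s1 s) s zc tc tc.
Definition gder_c : C := gpoly_der s zc tc.
Definition K_H : R := dq_modulus (coef_s1 s) s Bt zc.
Definition K_g : R := powsum_modulus (coef_s s) (s_pred s) Bt zc.
Definition M_H : R := coef_mass (coef_s1 s) s Bt.

(* [Hder] is H'(tc), by [pow_dq_diag].  On |t - tc| <= eta and |z - zc| <= eta the
   divided differences of H_z stay within |H'(tc)|/4 of H'(tc) and g'_z stays within
   |g'(tc)|/4 of g'(tc); shrinking to zrad moreover moves H_z(tc) by at most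
   |H'(tc)| eta / 8. *)
Definition eta : R :=
  Rmin 1 (Rmin (Cmod Hder / (4 * (K_H + 1))) (Cmod gder_c / (4 * (K_g + 1)))).
Definition zrad : R := Rmin eta (Cmod Hder * eta / (8 * (M_H + 1))).

Lemma Bt_ge1 : 1 <= Bt.
Proof. by have := Cmod_ge_0 tc; rewrite /Bt; lra. Qed.

Lemma Cmod_le_Bt t : Cmod (t - tc) <= 1 -> Cmod t <= Bt.
Proof. by have := Cmod_triangle (t - tc) tc; rewrite /Bt (_ : (t - tc + tc = t)%C); [lra | ring]. Qed.

Lemma Cmod_tc_le_Bt : Cmod tc <= Bt.
Proof. by apply: Cmod_le_Bt; rewrite Cmod_sub_diag; lra. Qed.

Lemma K_H_ge0 : 0 <= K_H. Proof. exact: dq_modulus_ge0 Bt_ge1 _. Qed.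
Lemma K_g_ge0 : 0 <= K_g. Proof. exact: powsum_modulus_ge0 Bt_ge1 _. Qed.
Lemma M_H_ge0 : 0 <= M_H. Proof. exact: coef_mass_ge0 Bt_ge1. Qed.

Hypotheses (Hder_neq0 : Hder <> 0%C) (gder_c_neq0 : gder_c <> 0%C).

Lemma Hder_pos : 0 < Cmod Hder. Proof. by apply/Cmod_gt_0. Qed.
Lemma gder_c_pos : 0 < Cmod gder_c. Proof. by apply/Cmod_gt_0. Qed.

Lemma eta_pos : 0 < eta.
Proof.
have := K_H_ge0; have := K_g_ge0; have := Hder_pos; have := gder_c_pos => *.
by apply: Rmin_pos; [lra | apply: Rmin_pos; apply: Rdiv_lt_0_compat; lra].
Qed.

Lemma eta_le1 : eta <= 1. Proof. exact: Rmin_l. Qed.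

Lemma eta_K_H : eta * K_H <= Cmod Hder / 4.
Proof.
apply: Rmult_le_div_succ; [apply: Cmod_ge_0 | exact: K_H_ge0 | lra |].
by apply: Rle_trans (Rmin_r _ _) _; apply: Rmin_l.
Qed.

Lemma eta_K_g : eta * K_g <= Cmod gder_c / 4.
Proof.
apply: Rmult_le_div_succ; [apply: Cmod_ge_0 | exact: K_g_ge0 | lra |].
by apply: Rle_trans (Rmin_r _ _) _; apply: Rmin_r.
Qed.

Lemma zrad_pos : 0 < zrad.
Proof.
have := eta_pos; have := Hder_pos; have := M_H_ge0 => *.
by apply: Rmin_pos => //; apply: Rdiv_lt_0_compat; [apply: Rmult_lt_0_compat | lra].
Qed.

Lemma zrad_le_eta : zrad <= eta. Proof. exact: Rmin_l. Qed.

Lemma zrad_M_H : zrad * M_H <= Cmod Hder * eta / 8.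
Proof.
have := eta_pos; have := Hder_pos => *.
apply: Rmult_le_div_succ; [nra | exact: M_H_ge0 | lra | exact: Rmin_r].
Qed.

Definition Hdq (z : CN N) (t1 t2 : C) : C := powsum_dq (coef_s1 s) s z t1 t2.

Lemma Hpoly_sub z t1 t2 : (Hpoly s z t1 - Hpoly s z t2 = (t1 - t2) * Hdq z t1 t2)%C.
Proof. by rewrite /Hpoly -powsum_sub; ring. Qed.

Section NearCenter.
Variables (z : CN N) (t1 t2 : C).
Hypotheses (Hz : CN_close z zc eta) (H1 : Cmod (t1 - tc) <= eta) (H2 : Cmod (t2 - tc) <= eta).

Lemma Hdq_near : Cmod (Hdq z t1 t2 - Hder) <= Cmod Hder / 4.
Proof.
have := eta_le1 => he; apply: Rle_trans (powsum_dq_cont _ _ Bt_ge1 _ _ _ Hz H1 H2) _.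
- by apply: Cmod_le_Bt; lra.
- by apply: Cmod_le_Bt; lra.
- exact: Cmod_tc_le_Bt.
- exact: eta_K_H.
Qed.

Lemma Hdq_lb : Cmod Hder / 2 <= Cmod (Hdq z t1 t2).
Proof.
have := Hdq_near; have := Cmod_sub_rev Hder (Hdq z t1 t2).
by rewrite Cmod_sub_sym; have := Hder_pos; lra.
Qed.

Lemma Hdq_neq0 : Hdq z t1 t2 <> 0%C.
Proof. by move=> E; have := Hdq_lb; rewrite E Cmod_0; have := Hder_pos; lra. Qed.

Lemma gpoly_der_near : Cmod (gpoly_der s z t1 - gder_c) <= Cmod gder_c / 4.
Proof.
have := eta_le1 => he; apply: Rle_trans (powsum_cont _ _ Bt_ge1 _ _ Hz H1) _.
- by apply: Cmod_le_Bt; lra.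
- exact: Cmod_tc_le_Bt.
- exact: eta_K_g.
Qed.

Lemma gpoly_der_neq0 : gpoly_der s z t1 <> 0%C.
Proof.
move=> E; have := gpoly_der_near; rewrite E (_ : (0 - gder_c = - gder_c)%C); last ring.
by rewrite Cmod_opp; have := gder_c_pos; lra.
Qed.

End NearCenter.

Lemma Hroot_lipschitz z w d u v : CN_close z zc eta -> CN_close w zc eta -> CN_close z w d ->
  Cmod (u - tc) <= eta -> Cmod (v - tc) <= eta -> Hpoly s z u = 0%C -> Hpoly s w v = 0%C ->
  Cmod (u - v) <= 2 * d * M_H / Cmod Hder.
Proof.
move=> Hz Hw Hd Hu Hv Ezu Ewv.
have E : ((u - v) * Hdq w u v = powsum (coef_s1 s) s w u - powsum (coef_s1 s) s z u)%C.
  rewrite -Hpoly_sub; move: Ezu Ewv; rewrite /Hpoly => Ezu Ewv.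
  rewrite Ewv; transitivity (powsum (coef_s1 s) s w u - 1 - (powsum (coef_s1 s) s z u - 1))%C;
    by [rewrite Ezu; ring | ring].
have Hb : Cmod ((u - v) * Hdq w u v) <= d * M_H.
  rewrite E; apply: (powsum_lipschitz_z _ _ Bt_ge1 _ (CN_close_sym Hd)).
  by apply: Cmod_le_Bt; have := eta_le1; lra.
rewrite Cmod_mult in Hb; have hl := Hdq_lb Hw Hu Hv; have hA := Hder_pos.
apply: (Rmult_le_reg_r (Cmod Hder / 2)); first lra.
rewrite (_ : 2 * d * M_H / Cmod Hder * (Cmod Hder / 2) = d * M_H); last by field; lra.
by apply: Rle_trans Hb; apply: Rmult_le_compat_l => //; apply: Cmod_ge_0.
Qed.

Hypothesis Hroot_c : Hpoly s zc tc = 0%C.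

Lemma Hpoly_near_c z : CN_close z zc zrad -> Cmod (Hpoly s z tc) <= Cmod Hder * eta / 8.
Proof.
move=> Hz; apply: Rle_trans zrad_M_H.
rewrite (_ : Hpoly s z tc = Hpoly s z tc - Hpoly s zc tc)%C; last by rewrite Hroot_c; ring.
rewrite /Hpoly (_ : (powsum (coef_s1 s) s z tc - 1 - (powsum (coef_s1 s) s zc tc - 1) =
  powsum (coef_s1 s) s z tc - powsum (coef_s1 s) s zc tc)%C); last ring.
exact: (powsum_lipschitz_z _ _ Bt_ge1 Cmod_tc_le_Bt).
Qed.

(* Newton-like iteration t |-> t - H_z(t) / H'(tc): a contraction of ratio 1/4 on the
   closed eta-disc around tc. *)
Lemma Hroot_exists z : CN_close z zc zrad ->
  exists t, Cmod (t - tc) <= eta /\ Hpoly s z t = 0%C.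
Proof.
move=> Hz; have Hz' := CN_close_le zrad_le_eta Hz.
have hA := Hder_pos; have he := eta_pos.
pose G t := (t - Hpoly s z t / Hder)%C.
have [t [Ht Gt]] : exists t, Cmod (t - tc) <= eta /\ G t = t.
{ apply: contraction_fixpoint => //.
  - rewrite /G (_ : (tc - Hpoly s z tc / Hder - tc = - (Hpoly s z tc / Hder))%C); last ring.
    rewrite Cmod_opp Cmod_div //; have := Hpoly_near_c Hz; have := Rmult_lt_0_compat _ _ hA he.
    by move=> *; apply: (Rmult_le_reg_r (Cmod Hder)) => //; field_simplify; lra.
  - move=> a b Ha Hb.
    rewrite (_ : (G a - G b = (a - b) * ((Hder - Hdq z a b) / Hder))%C); last first.
      by rewrite /G; transitivity (a - b - (Hpoly s z a - Hpoly s z b) / Hder)%C;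
        [field | rewrite Hpoly_sub; field].
    rewrite Cmod_mult Cmod_div // (Cmod_sub_sym Hder).
    have h1 := Hdq_near Hz' Ha Hb; have h2 := Cmod_ge_0 (a - b).
    have : Cmod (Hdq z a b - Hder) / Cmod Hder <= 1 / 4.
      by apply: (Rmult_le_reg_r (Cmod Hder)) => //; field_simplify; lra.
    nra. }
exists t; split => //; move: Gt; rewrite /G => Gt.
have E : (Hpoly s z t / Hder = 0)%C.
  by transitivity (t - (t - Hpoly s z t / Hder))%C; [ring | rewrite Gt; ring].
by transitivity (Hpoly s z t / Hder * Hder)%C; [field | rewrite E; ring].
Qed.

(* Hilbert's epsilon picks the root; it defaults to 0 where no root exists in the eta-disc. *)
Definition troot (z : CN N) : C :=
  epsilon (inhabits (RtoC 0)) (fun t => Cmod (t - tc) <= eta /\ Hpoly s z t = 0%C).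

Lemma troot_spec z : CN_close z zc zrad -> Cmod (troot z - tc) <= eta /\ Hpoly s z (troot z) = 0%C.
Proof. by move=> Hz; rewrite /troot; apply epsilon_spec; exact: Hroot_exists Hz. Qed.

Lemma troot_lipschitz z w d : CN_close z zc zrad -> CN_close w zc zrad -> CN_close z w d ->
  Cmod (troot z - troot w) <= 2 * d * M_H / Cmod Hder.
Proof.
move=> Hz Hw Hd; have [h1 h2] := troot_spec Hz; have [h3 h4] := troot_spec Hw.
exact: Hroot_lipschitz (CN_close_le zrad_le_eta Hz) (CN_close_le zrad_le_eta Hw) Hd h1 h3 h2 h4.
Qed.

Lemma troot_unique z u : CN_close z zc zrad -> Cmod (u - tc) <= eta -> Hpoly s z u = 0%C ->
  u = troot z.
Proof.
move=> Hz Hu Eu; have [h1 h2] := troot_spec Hz; have Hz' := CN_close_le zrad_le_eta Hz.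
have := Hroot_lipschitz Hz' Hz' (CN_close_refl z (Rle_refl 0)) Hu h1 Eu h2.
rewrite (_ : 2 * 0 * M_H / Cmod Hder = 0); last by field; have := Hder_pos; lra.
move=> h; have E : (u - troot z)%C = 0%C by apply: Cmod_eq_0; have := Cmod_ge_0 (u - troot z); lra.
by transitivity ((u - troot z) + troot z)%C; [ring | rewrite E; ring].
Qed.

Lemma troot_center : troot zc = tc.
Proof.
by symmetry; apply: troot_unique;
  [apply: CN_close_refl; have := zrad_pos; lra | rewrite Cmod_sub_diag; have := eta_pos; lra |].
Qed.

Lemma Hroot_gap z u : CN_close z zc zrad -> Hpoly s z u = 0%C ->
  Cmod (u - tc) <= eta / 4 \/ eta < Cmod (u - tc).
Proof.
move=> Hz Hu; case: (Rle_lt_dec (Cmod (u - tc)) eta) => H; last by right.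
left; rewrite (troot_unique Hz H Hu) -troot_center.
apply: Rle_trans (troot_lipschitz Hz (CN_close_refl zc (Rlt_le _ _ zrad_pos)) Hz) _.
have := zrad_M_H; have := Hder_pos => h1 h2.
by apply: (Rmult_le_reg_r (Cmod Hder)) => //; field_simplify; lra.
Qed.

Definition nbhd (z : CN N) : Prop := CN_ball zc zrad z.

Lemma nbhd_close z : nbhd z -> CN_close z zc zrad.
Proof. exact: CN_ball_close. Qed.

Lemma nbhd_center : nbhd zc.
Proof. by move=> j; rewrite Cmod_sub_diag; apply: zrad_pos. Qed.

Lemma troot_bounds z : nbhd z -> Cmod (troot z - tc) <= eta /\ Cmod (troot z) <= Bt.
Proof.
move=> /nbhd_close /troot_spec [h _]; split => //.
by apply: Cmod_le_Bt; have := eta_le1; lra.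
Qed.

Lemma troot_root z : nbhd z -> Hpoly s z (troot z) = 0%C.
Proof. by move=> /nbhd_close /troot_spec []. Qed.

Lemma gpoly_der_troot_neq0 z : nbhd z -> gpoly_der s z (troot z) <> 0%C.
Proof.
move=> Hz; apply: gpoly_der_neq0 (proj1 (troot_bounds Hz)).
exact: CN_close_le zrad_le_eta (nbhd_close Hz).
Qed.

Section Direction.
Variables (z : CN N) (i : 'I_N) (b : bool).
Hypothesis Hz : nbhd z.

Lemma punctured_nbhd (P : R -> Prop) : (forall h, h <> 0 -> nbhd (shift z i b h) -> P h) -> punctured0 P.
Proof.
move=> HP; have [d [hd H]] := CN_ball_shift i b Hz; exists d; split => // h [h1 h2].
by apply: HP; [move=> E; rewrite E Rabs_R0 in h1; lra | apply: H].
Qed.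

Lemma troot_shift_Clim : Clim punctured0 (fun h => troot (shift z i b h)) (troot z).
Proof.
apply: (Clim_lipschitz (M := 2 * M_H / Cmod Hder)) Clim_RtoC0.
  have := M_H_ge0; have := Hder_pos => *.
  by apply: Rmult_le_pos; [lra | apply: Rlt_le; apply: Rinv_0_lt_compat].
apply: punctured_nbhd => h _ Hh.
have := troot_lipschitz (nbhd_close Hh) (nbhd_close Hz) (CN_close_shift z i b h).
rewrite (_ : (RtoC h - 0 = h)%C) ?Cmod_R; last ring.
by move=> H; apply: Rle_trans H _; right; field; have := Hder_pos; lra.
Qed.

Lemma troot_shift_bounded : punctured0 (fun h => Cmod (troot (shift z i b h)) <= Bt).
Proof. by apply: punctured_nbhd => h _ /troot_bounds []. Qed.

Lemma powsum_dq_shift_Clim a n :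
  Clim punctured0 (fun h => powsum_dq a n z (troot (shift z i b h)) (troot z))
    (powsum_dq a n z (troot z) (troot z)).
Proof.
apply: (Clim_lipschitz (M := dq_modulus a n Bt z)) troot_shift_Clim.
  exact: dq_modulus_ge0 Bt_ge1 _.
apply: punctured_nbhd => h _ Hh; have [_ h1] := troot_bounds Hh; have [_ h2] := troot_bounds Hz.
rewrite Rmult_comm; apply: (powsum_dq_cont _ _ Bt_ge1) => //.
- by apply: CN_close_refl; apply: Cmod_ge_0.
- exact: Rle_refl.
- by rewrite Cmod_sub_diag; apply: Cmod_ge_0.
Qed.

Definition troot_dir : C :=
  (- (dir b * (coef_s1 s i * troot z ^ s i)) / Hdq z (troot z) (troot z))%C.

(* Implicit differentiation of H_z(troot z) = 0, at the level of difference quotients. *)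
Lemma troot_shift_eq h : nbhd (shift z i b h) ->
  ((troot (shift z i b h) - troot z) * Hdq z (troot (shift z i b h)) (troot z) =
   - (RtoC h * (dir b * (coef_s1 s i * troot (shift z i b h) ^ s i))))%C.
Proof.
move=> Hh; rewrite -Hpoly_sub.
have E1 := troot_root Hh; have E2 := troot_root Hz; rewrite /Hpoly powsum_shift in E1.
move: E2; rewrite /Hpoly => E2.
set t' := troot (shift z i b h) in E1 *.
transitivity ((powsum (coef_s1 s) s z t' + RtoC h * dir b * (coef_s1 s i * t' ^ s i) - 1) -
  (powsum (coef_s1 s) s z (troot z) - 1) - RtoC h * dir b * (coef_s1 s i * t' ^ s i))%C; first ring.
by rewrite E1 E2; ring.
Qed.

Lemma troot_dq : Clim punctured0 (fun h => ((troot (shift z i b h) - troot z) / RtoC h)%C) troot_dir.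
Proof.
have [hz1 hz2] := troot_bounds Hz.
apply: (Clim_ext (f := fun h => (- (dir b * (coef_s1 s i * troot (shift z i b h) ^ s i)) *
  / Hdq z (troot (shift z i b h)) (troot z))%C)).
- apply: punctured_nbhd => h Hh0 Hh.
  have HD := Hdq_neq0 (CN_close_le zrad_le_eta (nbhd_close Hz)) (proj1 (troot_bounds Hh)) hz1.
  have E := troot_shift_eq Hh.
  have -> : (troot (shift z i b h) - troot z =
    - (RtoC h * (dir b * (coef_s1 s i * troot (shift z i b h) ^ s i))) /
    Hdq z (troot (shift z i b h)) (troot z))%C by rewrite -E; field.
  by field; split => //; apply: RtoC_neq0.
- apply: Clim_mult.
    apply: Clim_opp; apply: (Clim_mult (Clim_const _)).
    apply: (Clim_mult (Clim_const _)).
    exact: (Clim_Cpow (s i) Bt_ge1 troot_shift_bounded hz2 troot_shift_Clim).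
  apply: (Clim_inv _ (powsum_dq_shift_Clim (coef_s1 s) s)).
  by apply: (Hdq_neq0 _ hz1 hz1); apply: CN_close_le zrad_le_eta (nbhd_close Hz).
Qed.

Definition powsum_root_dir a n : C :=
  (dir b * (a i * troot z ^ n i) + troot_dir * powsum_dq a n z (troot z) (troot z))%C.

Lemma powsum_root_dq a n : Clim punctured0
  (fun h => ((powsum a n (shift z i b h) (troot (shift z i b h)) - powsum a n z (troot z)) / RtoC h)%C)
  (powsum_root_dir a n).
Proof.
have [_ hz2] := troot_bounds Hz.
apply: (Clim_ext (f := fun h => (dir b * (a i * troot (shift z i b h) ^ n i) +
  ((troot (shift z i b h) - troot z) / RtoC h) * powsum_dq a n z (troot (shift z i b h)) (troot z))%C)).
- apply: punctured_nbhd => h Hh0 _; have Hh0' := RtoC_neq0 Hh0.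
  set t' := troot (shift z i b h).
  rewrite powsum_shift (_ : powsum a n z t' =
    (powsum a n z t' - powsum a n z (troot z)) + powsum a n z (troot z))%C; last ring.
  by rewrite powsum_sub; field.
- apply: Clim_plus; last exact: (Clim_mult troot_dq (powsum_dq_shift_Clim a n)).
  apply: (Clim_mult (Clim_const _)); apply: (Clim_mult (Clim_const _)).
  exact: (Clim_Cpow (n i) Bt_ge1 troot_shift_bounded hz2 troot_shift_Clim).
Qed.

Lemma powsum_root_shift_Clim a n :
  Clim punctured0 (fun h => powsum a n (shift z i b h) (troot (shift z i b h))) (powsum a n z (troot z)).
Proof.
apply: (Clim_ext (f := fun h => (powsum a n z (troot z) + RtoC h *
  ((powsum a n (shift z i b h) (troot (shift z i b h)) - powsum a n z (troot z)) / RtoC h))%C)).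
  by apply: punctured_nbhd => h Hh0 _; field; apply: RtoC_neq0.
have := Clim_plus (Clim_const (powsum a n z (troot z))) (Clim_mult Clim_RtoC0 (powsum_root_dq a n)).
by rewrite Cmult_0_l Cplus_0_r; apply.
Qed.

End Direction.

(* The critical point and branch value, read off the root t = x y of H_z
   (lemma crit_eqs_of_root). *)
Definition xcrit (z : CN N) : C := (/ gpoly_der s z (troot z))%C.
Definition lcrit (z : CN N) : C := (1 + gpoly s z (troot z))%C.

Definition xcrit_dir z i b : C :=
  (- powsum_root_dir z i b (coef_s s) (s_pred s) * / gpoly_der s z (troot z) *
   / gpoly_der s z (troot z))%C.
Definition lcrit_dir z i b : C := powsum_root_dir z i b (@coef_one N) s.

Lemma xcrit_dq z i b : nbhd z ->
  Clim punctured0 (fun h => ((xcrit (shift z i b h) - xcrit z) / RtoC h)%C) (xcrit_dir z i b).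
Proof.
move=> Hz; have H0 := gpoly_der_troot_neq0 Hz.
apply: (Clim_ext (f := fun h => (- ((gpoly_der s (shift z i b h) (troot (shift z i b h)) -
  gpoly_der s z (troot z)) / RtoC h) * / gpoly_der s (shift z i b h) (troot (shift z i b h)) *
  / gpoly_der s z (troot z))%C)).
  apply: (punctured_nbhd Hz) => h /RtoC_neq0 Hh0 Hh; have Hh1 := gpoly_der_troot_neq0 Hh.
  by rewrite /xcrit; field; split; [exact: H0 | split; [exact: Hh1 | exact: Hh0]].
apply: (Clim_mult _ (Clim_const _)); apply: Clim_mult; first exact: Clim_opp (powsum_root_dq _ _ Hz _ _).
exact: Clim_inv H0 (powsum_root_shift_Clim _ _ Hz _ _).
Qed.

Lemma lcrit_dq z i b : nbhd z ->
  Clim punctured0 (fun h => ((lcrit (shift z i b h) - lcrit z) / RtoC h)%C) (lcrit_dir z i b).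
Proof.
move=> Hz; apply: Clim_ext (powsum_root_dq _ _ Hz (@coef_one N) s).
by apply: filter_forall => h; rewrite /lcrit /gpoly; congr Cdiv; ring.
Qed.

Section Continuity.
Variable z0 : CN N.
Hypothesis Hz0 : nbhd z0.

Lemma troot_cont : Clim (near_in nbhd z0) troot (troot z0).
Proof.
move=> e he; have hA := Hder_pos; have hM := M_H_ge0.
exists (e * Cmod Hder / (2 * (M_H + 1))); split; first by apply: Rdiv_lt_0_compat; nra.
move=> w [Ow Bw].
apply: Rle_lt_trans (troot_lipschitz (nbhd_close Ow) (nbhd_close Hz0) (CN_ball_close Bw)) _.
apply: (Rmult_lt_reg_r (Cmod Hder)) => //; field_simplify; try lra.
by apply: (Rmult_lt_reg_r (M_H + 1)); [lra | field_simplify; nra].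
Qed.

Lemma Clim_near_of_modulus (f : CN N -> C) (l : C) (K : R) : 0 <= K ->
  (forall w e, nbhd w -> CN_close w z0 e -> Cmod (troot w - troot z0) <= e ->
     Cmod (f w - l) <= e * K) ->
  Clim (near_in nbhd z0) f l.
Proof.
move=> HK Hf e he; set e' := e / (K + 1).
have he' : 0 < e' by apply: Rdiv_lt_0_compat; lra.
have [d1 [hd1 H1]] := troot_cont he'.
exists (Rmin d1 e'); split; first exact: Rmin_pos.
move=> w [Ow Bw]; apply: Rle_lt_trans (Hf w e' Ow _ _) _.
- by move=> j; apply: Rlt_le; apply: Rlt_le_trans (Bw j) (Rmin_r _ _).
- by apply: Rlt_le; apply: H1; split => // j; apply: Rlt_le_trans (Bw j) (Rmin_l _ _).
- by apply: (Rmult_lt_reg_r (K + 1)); [lra | rewrite /e'; field_simplify; lra].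
Qed.

Lemma troot_near_bounded : near_in nbhd z0 (fun w => Cmod (troot w) <= Bt).
Proof. by exists 1; split; [lra | move=> w [/troot_bounds [] ]]. Qed.

Lemma powsum_dq_root_cont a n :
  Clim (near_in nbhd z0) (fun w => powsum_dq a n w (troot w) (troot w))
    (powsum_dq a n z0 (troot z0) (troot z0)).
Proof.
apply: (Clim_near_of_modulus (dq_modulus_ge0 a n Bt_ge1 z0)) => w e Ow Hw Ht.
by have [_ h1] := troot_bounds Ow; have [_ h2] := troot_bounds Hz0; apply: (powsum_dq_cont _ _ Bt_ge1).
Qed.

Lemma powsum_root_cont a n :
  Clim (near_in nbhd z0) (fun w => powsum a n w (troot w)) (powsum a n z0 (troot z0)).
Proof.
apply: (Clim_near_of_modulus (powsum_modulus_ge0 a n Bt_ge1 z0)) => w e Ow Hw Ht.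
by have [_ h1] := troot_bounds Ow; have [_ h2] := troot_bounds Hz0; apply: (powsum_cont _ _ Bt_ge1).
Qed.

Lemma troot_pow_cont n : Clim (near_in nbhd z0) (fun w => troot w ^ n)%C (troot z0 ^ n)%C.
Proof. exact: (Clim_Cpow n Bt_ge1 troot_near_bounded (proj2 (troot_bounds Hz0)) troot_cont). Qed.

Lemma powsum_root_dir_cont i b a n :
  Clim (near_in nbhd z0) (fun w => powsum_root_dir w i b a n) (powsum_root_dir z0 i b a n).
Proof.
apply: Clim_plus; first exact: (Clim_mult (Clim_const _) (Clim_mult (Clim_const _) (troot_pow_cont _))).
apply: Clim_mult (powsum_dq_root_cont a n).
apply: (Clim_mult (Clim_opp (Clim_mult (Clim_const _) (Clim_mult (Clim_const _) (troot_pow_cont _))))).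
apply: Clim_inv (powsum_dq_root_cont (coef_s1 s) s).
by have [h _] := troot_bounds Hz0; apply: (Hdq_neq0 _ h h); apply: CN_close_le zrad_le_eta (nbhd_close Hz0).
Qed.

Lemma xcrit_dir_cont i b : Clim (near_in nbhd z0) (fun w => xcrit_dir w i b) (xcrit_dir z0 i b).
Proof.
have Hinv : Clim (near_in nbhd z0) (fun w => / gpoly_der s w (troot w))%C
    (/ gpoly_der s z0 (troot z0))%C.
  exact: Clim_inv (gpoly_der_troot_neq0 Hz0) (powsum_root_cont (coef_s s) (s_pred s)).
exact: (Clim_mult (Clim_mult (Clim_opp (powsum_root_dir_cont i b _ _)) Hinv) Hinv).
Qed.

End Continuity.

Lemma xcrit_C1 : C1_on xcrit nbhd.
Proof. by apply: C1_on_of_Clim => z i b Hz; [apply: xcrit_dq | apply: xcrit_dir_cont]. Qed.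

Lemma lcrit_C1 : C1_on lcrit nbhd.
Proof. by apply: C1_on_of_Clim => z i b Hz; [apply: lcrit_dq | apply: powsum_root_dir_cont]. Qed.

Hypothesis Hs1 : forall i, (1 <= s i)%coq_nat.

Lemma xcrit_lcrit_eqs z : nbhd z ->
  F s z (lcrit z) (xcrit z) = 0%C /\ dyF s z (lcrit z) (xcrit z) = 0%C.
Proof. by move=> Hz; have [_ E] := crit_eqs_of_root Hs1 (troot_root Hz) (gpoly_der_troot_neq0 Hz). Qed.

(* A path from zc to z made of segments in real coordinate directions. *)
Definition staircase (z : CN N) (k : nat) : CN N := fun j => if (j < k)%nat then z j else zc j.

Lemma staircase0 z : staircase z 0 = zc.
Proof. by apply: functional_extensionality. Qed.

Lemma staircaseN z : staircase z N = z.
Proof. by apply: functional_extensionality => j; rewrite /staircase ltn_ord. Qed.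

Lemma staircase_nbhd z k : nbhd z -> nbhd (staircase z k).
Proof. by move=> Hz j; rewrite /staircase; case: (j < k)%nat; [apply: Hz | apply: nbhd_center]. Qed.

Section Step.
Variables (z : CN N) (k : nat) (Hk : (k < N)%nat).
Hypothesis Hz : nbhd z.

Let i : 'I_N := Ordinal Hk.
Let d : C := (z i - zc i)%C.

Lemma staircase_succ :
  staircase z k.+1 = shift (shift (staircase z k) i false (fst d)) i true (snd d).
Proof.
apply: functional_extensionality => j; rewrite /shift /staircase; case E: (j == i).
  by move/eqP: E => ->; rewrite /= ltnSn ltnn /d; apply: injective_projections => /=; ring.
rewrite ltnS leq_eqVlt; suff /negbTE -> : (nat_of_ord j != k) by [].
by apply: contraFN E => /eqP Ej; apply/eqP; apply: val_inj.
Qed.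

Lemma staircase_segment_re t : 0 <= t <= 1 -> nbhd (shift (staircase z k) i false (t * fst d)).
Proof.
move=> Ht j; rewrite /shift; case E: (j == i); last exact: staircase_nbhd.
move/eqP: E => ->; rewrite /staircase /= ltnn.
rewrite (_ : (zc i + RtoC (t * fst d) * 1 - zc i)%C = (t * fst d, 0)); last first.
  by apply: injective_projections => /=; ring.
exact: Rle_lt_trans (Cmod_shrink_re d Ht) (Hz i).
Qed.

Lemma staircase_segment_im t : 0 <= t <= 1 ->
  nbhd (shift (shift (staircase z k) i false (fst d)) i true (t * snd d)).
Proof.
move=> Ht j; rewrite /shift; case E: (j == i); last exact: staircase_nbhd.
move/eqP: E => ->; rewrite /staircase /= ltnn.
rewrite (_ : (zc i + RtoC (fst d) * 1 + RtoC (t * snd d) * Ci - zc i)%C = (fst d, t * snd d));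
  last by apply: injective_projections => /=; ring.
exact: Rle_lt_trans (Cmod_shrink_im d Ht) (Hz i).
Qed.

End Step.

Section Uniqueness.
Variables (xs' lam' : CN N -> C).
Hypotheses (Hx' : C1_on xs' nbhd) (Hl' : C1_on lam' nbhd)
  (Heqs : forall z, nbhd z -> F s z (lam' z) (xs' z) = 0%C /\ dyF s z (lam' z) (xs' z) = 0%C).

Definition tprod (z : CN N) : C := (xs' z * lam' z)%C.

Lemma tprod_root z : nbhd z -> Hpoly s z (tprod z) = 0%C.
Proof. by move=> Hz; have [E1 E2] := Heqs Hz; have [] := crit_eqs_reduce Hs1 E1 E2. Qed.

Lemma tprod_segment w i b L : (forall t, 0 <= t <= 1 -> nbhd (shift w i b (t * L))) ->
  Cmod (tprod w - tc) <= eta / 4 -> Cmod (tprod (shift w i b L) - tc) <= eta / 4.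
Proof.
move=> Hin Hw; have := @IVT_gap (fun t => Cmod (tprod (shift w i b (t * L)) - tc)) (eta / 4) eta.
rewrite Rmult_0_l Rmult_1_l shift0; apply => //; first by have := eta_pos; lra.
- move=> t0 /Hin Ht0; apply: continuity_pt_Cmod_sub.
  exact: Clim_mult (C1_on_line_Clim Hx' Ht0) (C1_on_line_Clim Hl' Ht0).
- by move=> t /Hin Ht; apply: Hroot_gap (nbhd_close Ht) (tprod_root Ht).
Qed.

Lemma tprod_staircase z k : nbhd z -> (k <= N)%nat -> tprod zc = tc ->
  Cmod (tprod (staircase z k) - tc) <= eta / 4.
Proof.
move=> Hz; elim: k => [_|k IH Hk] Hc; first by rewrite staircase0 Hc Cmod_sub_diag; have := eta_pos; lra.
rewrite (staircase_succ _ Hk); apply: tprod_segment; first exact: staircase_segment_im.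
by apply: tprod_segment; [apply: staircase_segment_re | apply: IH; [apply: ltnW |]].
Qed.

Lemma crit_unique z : nbhd z -> tprod zc = tc -> xs' z = xcrit z /\ lam' z = lcrit z.
Proof.
move=> Hz Hc; have := tprod_staircase Hz (leqnn N) Hc; rewrite staircaseN => Ht.
have Et : tprod z = troot z.
  by apply: troot_unique (nbhd_close Hz) _ (tprod_root Hz); have := eta_pos; lra.
have [E1 E2] := Heqs Hz; have [Ex Ey _] := crit_eqs_reduce Hs1 E1 E2.
rewrite -/(tprod z) Et in Ex Ey; split => //.
have Hg := gpoly_der_troot_neq0 Hz.
by transitivity (xs' z * gpoly_der s z (troot z) * / gpoly_der s z (troot z))%C;
  [field | rewrite Ex /xcrit; ring].
Qed.

End Uniqueness.

Lemma xcrit_neq0 z : nbhd z -> xcrit z <> 0%C.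
Proof.
move=> Hz E; have Hg := gpoly_der_troot_neq0 Hz.
have : (xcrit z * gpoly_der s z (troot z))%C = 1%C by rewrite /xcrit; field.
by rewrite E Cmult_0_l => /(f_equal fst) /=; lra.
Qed.

Lemma xcrit_cont z0 : nbhd z0 -> Clim (near_in nbhd z0) xcrit (xcrit z0).
Proof. by move=> Hz0; apply: Clim_inv (gpoly_der_troot_neq0 Hz0) (powsum_root_cont Hz0 _ _). Qed.

Lemma Cmod_deriv_xcrit_cont z0 i b : nbhd z0 ->
  Clim (near_in nbhd z0) (fun w => Cconj (xcrit w) * xcrit_dir w i b * / RtoC (Cmod (xcrit w)))%C
    (Cconj (xcrit z0) * xcrit_dir z0 i b * / RtoC (Cmod (xcrit z0)))%C.
Proof.
move=> Hz0; have Hx := xcrit_cont Hz0.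
apply: Clim_mult (Clim_mult (Clim_conj Hx) (xcrit_dir_cont Hz0 i b)) (Clim_inv _ (Clim_Cmod Hx)).
by move=> /(f_equal fst) /= E; apply: (xcrit_neq0 Hz0); apply: Cmod_eq_0.
Qed.

Lemma rho_star_C1 : (forall z, nbhd z -> rho_star s z = Finite (Cmod (xcrit z))) ->
  C1_on (fun z => real (rho_star s z)) nbhd.
Proof.
move=> Hrho; exists (fun i b z => Cmod_deriv (xcrit z) (xcrit_dir z i b)); split.
- move=> z i b Hz.
  have Hd := is_derive_Cmod (phi := fun h => xcrit (shift z i b h)) (l := xcrit_dir z i b).
  rewrite shift0 in Hd; apply: (is_derive_ext_loc _ _ _ _ _ (Hd (xcrit_neq0 Hz) (xcrit_dq i b Hz))).
  have [d [hd Hdd]] := CN_ball_shift i b Hz; exists (mkposreal d hd) => t /ball0_R Ht.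
  by rewrite Hrho //; apply: Hdd.
- move=> i b z Hz eps He; have [d [hd H]] := Cmod_deriv_xcrit_cont i b Hz He.
  exists d; split => // w Ow Bw; apply: Rle_lt_trans (H w (conj Ow Bw)).
  exact: norm_minus_fst_le.
Qed.

End ImplicitBranch.

Lemma rho_star_singular (N : nat) (s : 'I_N -> nat) (z : CN N) (x : C) :
  singular_pt s z x -> rho_star s z = Finite (Cmod x).
Proof. by move=> [Hfin [-> _]]. Qed.

Theorem lemma3p7
  (N : nat) (s : 'I_N -> nat)
  (HN : (1 <= N)%coq_nat)
  (Hs2 : forall i : 'I_N, (2 <= s i)%coq_nat)
  (Hsinc : forall i j : 'I_N, (nat_of_ord i < nat_of_ord j)%coq_nat -> (s i < s j)%coq_nat)
  (zc : CN N) (xc lamc : C)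
  (Hzc : crit_set s zc)
  (Hxc : singular_pt s zc xc)
  (Hlamc : branch_value s zc xc lamc)
  (HF : F s zc lamc xc = RtoC 0)
  (HFy : dyF s zc lamc xc = RtoC 0)
  (HFyy : dyyF s zc lamc xc <> RtoC 0) :
  exists O : CN N -> Prop,
    CN_open O /\ O zc /\
    exists (xs lam : CN N -> C),
      C1_on xs O /\ C1_on lam O /\
      xs zc = xc /\ lam zc = lamc /\
      (forall z, O z -> F s z (lam z) (xs z) = RtoC 0 /\ dyF s z (lam z) (xs z) = RtoC 0) /\
      (forall xs' lam' : CN N -> C,
         C1_on xs' O -> C1_on lam' O -> xs' zc = xc -> lam' zc = lamc ->
         (forall z, O z -> F s z (lam' z) (xs' z) = RtoC 0 /\ dyF s z (lam' z) (xs' z) = RtoC 0) ->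
         forall z, O z -> xs' z = xs z /\ lam' z = lam z) /\
      ((forall z, O z -> dominant s z /\ singular_pt s z (xs z)) ->
         (forall z, O z -> rho_star s z = Finite (Cmod (xs z))) /\
         C1_on (fun z => real (rho_star s z)) O).
Proof.
have Hs1 i : (1 <= s i)%coq_nat by have := Hs2 i; lia.
have [Ex Ey Ht] := crit_eqs_reduce Hs1 HF HFy.
set tc := (xc * lamc)%C in Ex Ey Ht.
have Hg : gder_c s zc tc <> 0%C.
  by rewrite /gder_c => E; move: Ex; rewrite E Cmult_0_r => /(f_equal fst) /=; lra.
have HH : Hder s zc tc <> 0%C := Hpoly_dq_neq0 Hs1 Hs2 HF HFy HFyy.
have Hc : troot s zc tc zc = tc := troot_center HH Hg Ht.
exists (nbhd s zc tc); split; first exact: CN_ball_open (zrad_pos HH Hg).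
split; first exact: nbhd_center.
exists (xcrit s zc tc), (lcrit s zc tc).
split; first exact: xcrit_C1.
split; first exact: lcrit_C1.
split.
  rewrite /xcrit Hc; transitivity ((xc * gpoly_der s zc tc) * / gpoly_der s zc tc)%C.
    by rewrite Ex; ring.
  by field; exact: Hg.
split; first by rewrite /lcrit Hc Ey.
split; first by move=> z; exact: xcrit_lcrit_eqs.
split; first by move=> xs' lam' H1 H2 E1 E2 Heqs z Hz; apply: crit_unique => //; rewrite /tprod E1 E2.
move=> Hdom; have Hrho z Hz := rho_star_singular (proj2 (Hdom z Hz)).
by split => //; apply: rho_star_C1.
Qed.
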